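(* Let $0<q<1$ and $\lambda>0$, and let $X$ be a random variable with distribution function $F_X(t)=1-e_q(-\lambda t)$ for $t\ge 0$ (and $F_X(t)=0$ for $t<0$). Then $P_X$ is moment indeterminate in the classical sense, i.e. there exists a probability distribution on $[0,\infty)$ different from $P_X$ having the same moments $\int t^n\,dP$ for all $n\in\mathbb{N}_0$.
   Context: The $q$-exponential function is $e_q(t)=\prod_{j=0}^\infty\bigl(1-t(1-q)q^j\bigr)^{-1}$, so that $e_q(-\lambda t)=\prod_{j=0}^\infty\bigl(1+\lambda(1-q)q^jt\bigr)^{-1}$ for $t\ge0$. This $F_X$ is the distribution function of the $q$-exponential distribution, whose $q$-density is $\lambda e_q(-\lambda t)$; it is absolutely continuous with finite moments of all orders. *)

From Stdlib Require Import Reals.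
Open Scope R_scope.

Fixpoint fsum (g : nat -> R) (k : nat) : R :=
  match k with
  | O => 0
  | S k' => fsum g k' + g k'
  end.

Fixpoint fprod (g : nat -> R) (N : nat) : R :=
  match N with
  | O => 1
  | S N' => fprod g N' * g N'
  end.

(* Partial product  prod_{j<N} (1 + lam (1-q) q^j t)^{-1}; its limit as
   N -> oo is e_q(-lam t). *)
Definition eq_neg_partial (q lam t : R) (N : nat) : R :=
  fprod (fun j => / (1 + lam * (1 - q) * q ^ j * t)) N.

Definition tagged_partition (a b : R) (k : nat) (p xi : nat -> R) (d : R) :
  Prop :=
  (0 < k)%nat /\ p 0%nat = a /\ p k = b /\
  (forall i, (i < k)%nat ->
     p i < p (S i) /\ p (S i) - p i < d /\ p i <= xi i <= p (S i)).

Definition rs_sum (f F : R -> R) (k : nat) (p xi : nat -> R) : R :=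
  fsum (fun i => f (xi i) * (F (p (S i)) - F (p i))) k.

Definition RS_integral (f F : R -> R) (a b I : R) : Prop :=
  forall eps, 0 < eps -> exists d, 0 < d /\
    forall k p xi, tagged_partition a b k p xi d ->
      Rabs (rs_sum f F k p xi - I) < eps.

Definition distribution_function_on_nonneg (F : R -> R) : Prop :=
  (forall x y, x <= y -> F x <= F y) /\
  (forall x eps, 0 < eps -> exists d, 0 < d /\
       forall y, x <= y < x + d -> Rabs (F y - F x) < eps) /\
  (forall t, t < 0 -> F t = 0) /\
  (forall eps, 0 < eps -> exists B, forall t, B <= t -> Rabs (F t - 1) < eps).

(* m is the n-th moment  int t^n dP  of the distribution with distribution
   function F (supported on [0,oo)): the improper Riemann-Stieltjes integral
   lim_{b->oo} int_{[-1,b]} t^n dF(t)  (starting at -1 so that a possible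
   atom at 0 is included; F = 0 on (-oo,0)). *)
Definition moment (F : R -> R) (n : nat) (m : R) : Prop :=
  exists I : R -> R,
    (forall b, 0 <= b -> RS_integral (fun t => t ^ n) F (-1) b (I b)) /\
    (forall eps, 0 < eps -> exists B, forall b, B <= b -> Rabs (I b - m) < eps).

(* For t >= 0 write phi t = 1 - FX t = e_q(-lam t) and a = lam (1 - q).  Let
   s t = sin (alpha ln t) with alpha = -2 pi / ln q, so that s (t / q) = s t,
   and perturb FX by the log-periodic function K t = s t (FX (t / q) - FX t):
   the competing distribution is G = FX - eps K for a small eps > 0.

   Dilating t -> t / q and using the functional
      equation, the integrals A_m = ∫_0^oo t^m s phi satisfy a recurrence
      A_(m+1) ~ A_m, while A_0 = 0 because s t / t integrates to 0 over each
      period [q x, x]; and ∫_0^oo t^m K = (1 - q^(m+1)) A_m.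
   4. G is a distribution function: on short steps |K y - K x| is at most a
      constant c times FX y - FX x, so G is nondecreasing for eps = 1 / c; G
      tends to 1 because phi decays; and G <> FX because phi > 0.
   5. Consequently FX and G have the same finite moments. *)

From Stdlib Require Import Reals Lra Lia Classical_Prop.
From Coquelicot Require Import Coquelicot.
Open Scope R_scope.

(** Coquelicot's
    [RInt] lives in an arbitrary complete normed module; fixing the codomain
    [R] lets [ring]/[lra] treat integrals as ordinary real atoms. *)
Definition integral (f : R -> R) (a b : R) : R := RInt f a b.

Lemma integral_minus (f g : R -> R) a b : ex_RInt f a b -> ex_RInt g a b ->
  integral (fun x => f x - g x) a b = integral f a b - integral g a b.
Proof. exact (RInt_minus f g a b). Qed.

Lemma integral_plus (f g : R -> R) a b : ex_RInt f a b -> ex_RInt g a b ->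
  integral (fun x => f x + g x) a b = integral f a b + integral g a b.
Proof. exact (RInt_plus f g a b). Qed.

Lemma integral_scal (f : R -> R) a b c : ex_RInt f a b ->
  integral (fun x => c * f x) a b = c * integral f a b.
Proof. exact (RInt_scal f a b c). Qed.

Lemma integral_Chasles (f : R -> R) a b c : ex_RInt f a b -> ex_RInt f b c ->
  integral f a b + integral f b c = integral f a c.
Proof. exact (RInt_Chasles f a b c). Qed.

Lemma integral_point (f : R -> R) a : integral f a a = 0.
Proof. exact (RInt_point a f). Qed.

Lemma integral_const c a b : integral (fun _ => c) a b = (b - a) * c.
Proof. exact (RInt_const a b c). Qed.

Lemma integral_ext (f g : R -> R) a b :
  (forall x, Rmin a b < x < Rmax a b -> f x = g x) -> integral f a b = integral g a b.
Proof. exact (RInt_ext f g a b). Qed.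

Lemma integral_abs_le (f : R -> R) a b M : a <= b -> ex_RInt f a b ->
  (forall t, a <= t <= b -> Rabs (f t) <= M) -> Rabs (integral f a b) <= (b - a) * M.
Proof. exact (abs_RInt_le_const f a b M). Qed.

Lemma integral_le (f g : R -> R) a b : a <= b -> ex_RInt f a b -> ex_RInt g a b ->
  (forall x, a < x < b -> f x <= g x) -> integral f a b <= integral g a b.
Proof. exact (RInt_le f g a b). Qed.

Lemma integral_ge0 (f : R -> R) a b : a <= b -> ex_RInt f a b ->
  (forall x, a < x < b -> 0 <= f x) -> 0 <= integral f a b.
Proof. exact (RInt_ge_0 f a b). Qed.

(** Real-valued specializations of Coquelicot's generic integrability,
    continuity and differentiability lemmas, whose structure parameters are
    not inferred by unification for functions [R -> R]. *)
Lemma ex_RInt_scalR (f : R -> R) a b c : ex_RInt f a b ->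
  ex_RInt (fun x => c * f x) a b.
Proof. exact (ex_RInt_scal f a b c). Qed.

Lemma ex_RInt_contR (f : R -> R) a b :
  (forall z, Rmin a b <= z <= Rmax a b -> continuous f z) -> ex_RInt f a b.
Proof. exact (ex_RInt_continuous (V := R_CompleteNormedModule) f a b). Qed.

Lemma continuous_multR (f g : R -> R) x : continuous f x -> continuous g x ->
  continuous (fun y => f y * g y) x.
Proof. exact (continuous_mult f g x). Qed.

Lemma ex_derive_contR (f : R -> R) x : ex_derive f x -> continuous f x.
Proof. exact (ex_derive_continuous (K := R_AbsRing) (V := R_NormedModule) f x). Qed.

Lemma integral_FTC (f df : R -> R) a b : a <= b ->
  (forall x, a <= x <= b -> is_derive f x (df x)) ->
  (forall x, a <= x <= b -> continuous df x) ->
  integral df a b = f b - f a.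
Proof.
  intros Hab Hd Hc. apply is_RInt_unique, (is_RInt_derive f df a b);
    intros x Hx; rewrite Rmin_left, Rmax_right in Hx by lra; auto.
Qed.

Lemma fsum_minus g h k : fsum (fun i => g i - h i) k = fsum g k - fsum h k.
Proof. induction k as [|k IH]; simpl; [ring|rewrite IH; ring]. Qed.

Lemma fsum_scal c g k : fsum (fun i => c * g i) k = c * fsum g k.
Proof. induction k as [|k IH]; simpl; [ring|rewrite IH; ring]. Qed.

Lemma fsum_abs g k : Rabs (fsum g k) <= fsum (fun i => Rabs (g i)) k.
Proof.
  induction k as [|k IH]; simpl; [rewrite Rabs_R0; lra|].
  eapply Rle_trans; [apply Rabs_triang|lra].
Qed.

Lemma fsum_le g h k : (forall i, (i < k)%nat -> g i <= h i) -> fsum g k <= fsum h k.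
Proof.
  induction k as [|k IH]; simpl; intros H; [lra|].
  assert (g k <= h k) by (apply H; lia).
  assert (fsum g k <= fsum h k) by (apply IH; intros; apply H; lia). lra.
Qed.

Lemma fsum_tele u k : fsum (fun i => u (S i) - u i) k = u k - u 0%nat.
Proof. induction k as [|k IH]; simpl; [ring|rewrite IH; ring]. Qed.

Lemma partition_points_in a b k p xi d : tagged_partition a b k p xi d ->
  forall j, (j <= k)%nat -> a <= p j <= b.
Proof.
  intros (_ & Ha & Hb & Hp).
  assert (Mono : forall i j, (i <= j <= k)%nat -> p i <= p j).
  { intros i j. induction j as [|j IH]; intros Hij.
    - replace i with 0%nat by lia. lra.
    - destruct (Nat.eq_dec i (S j)) as [->|Hne]; [lra|].
      destruct (Hp j ltac:(lia)) as [Hlt _]. specialize (IH ltac:(lia)). lra. }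
  intros j Hj. rewrite <- Ha, <- Hb. split; apply Mono; lia.
Qed.

Lemma rs_sum_error (f F H : R -> R) k p xi :
  Rabs (rs_sum f F k p xi - (H (p k) - H (p 0%nat)))
  <= fsum (fun i => Rabs (f (xi i) * (F (p (S i)) - F (p i))
                          - (H (p (S i)) - H (p i)))) k.
Proof.
  unfold rs_sum. rewrite <- (fsum_tele (fun i => H (p i))), <- fsum_minus.
  apply fsum_abs.
Qed.

Lemma RS_integral_of_local_approx (f F H : R -> R) (a b : R) :
  a < b ->
  (forall e, 0 < e -> exists d, 0 < d /\
     forall u v xi, a <= u -> u <= xi <= v -> v <= b -> v - u < d ->
       Rabs (f xi * (F v - F u) - (H v - H u)) <= e * (v - u)) ->
  RS_integral f F a b (H b - H a).
Proof.
  intros Hab Hloc eps Heps.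
  set (e := eps / (2 * (b - a))).
  destruct (Hloc e) as [d [Hd Hcell]]; [unfold e; apply Rdiv_lt_0_compat; lra|].
  exists d. split; [exact Hd|]. intros k p xi HP.
  pose proof (partition_points_in _ _ _ _ _ _ HP) as Pin.
  destruct HP as (_ & Ha & Hb & Hp). rewrite <- Ha, <- Hb.
  eapply Rle_lt_trans; [apply rs_sum_error|].
  apply Rle_lt_trans with (fsum (fun i => e * (p (S i) - p i)) k).
  - apply fsum_le. intros i Hi. destruct (Hp i Hi) as (H1 & H2 & H3).
    apply Hcell; try lra; apply Pin; lia.
  - rewrite fsum_scal, (fsum_tele p), Ha, Hb.
    replace (e * (b - a)) with (eps / 2) by (unfold e; field; lra). lra.
Qed.

Lemma increment_of_bounded_derivative (f df : R -> R) u v C : u <= v ->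
  (forall x, u <= x <= v -> is_derive f x (df x)) ->
  (forall x, u <= x <= v -> continuous df x) ->
  (forall x, u <= x <= v -> Rabs (df x) <= C) ->
  Rabs (f v - f u) <= C * (v - u).
Proof.
  intros Huv Hd Hdc Hdb. rewrite <- (integral_FTC f df u v) by assumption.
  rewrite Rmult_comm. apply integral_abs_le; [exact Huv| |exact Hdb].
  apply ex_RInt_contR. rewrite Rmin_left, Rmax_right by exact Huv. exact Hdc.
Qed.

Lemma by_parts_cell (f df F : R -> R) (u v xi C e : R) :
  u <= xi <= v ->
  (forall x, u <= x <= v -> is_derive f x (df x)) ->
  (forall x, u <= x <= v -> continuous df x) ->
  (forall x, u <= x <= v -> Rabs (df x) <= C) ->
  (forall x, u <= x <= v -> continuous F x) ->
  (forall x, u <= x <= v -> Rabs (F x - F v) <= e) ->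
  Rabs (f xi * (F v - F u) - (f v * F v - f u * F u - integral (fun t => df t * F t) u v))
  <= 2 * C * e * (v - u).
Proof.
  intros Hxi Hd Hdc Hdb HF Hosc.
  assert (Hex : forall g : R -> R, (forall x, u <= x <= v -> continuous g x) -> ex_RInt g u v).
  { intros g Hg. apply ex_RInt_contR. rewrite Rmin_left, Rmax_right by lra. exact Hg. }
  assert (Hf_incr : Rabs (f xi - f u) <= C * (xi - u)).
  { apply (increment_of_bounded_derivative f df);
      [lra|intros; apply Hd; lra|intros; apply Hdc; lra|intros; apply Hdb; lra]. }
  assert (Hsplit : integral (fun t => df t * F t) u v
                   = (f v - f u) * F v + integral (fun t => df t * (F t - F v)) u v).
  { assert (Hft : integral df u v = f v - f u) by (apply integral_FTC; auto; lra).
    assert (Hdf : ex_RInt df u v) by (apply Hex; auto).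
    assert (HdfF : ex_RInt (fun t => df t * F t) u v)
      by (apply Hex; intros; apply continuous_multR; auto).
    rewrite <- Hft.
    rewrite (integral_ext (fun t => df t * (F t - F v)) (fun t => df t * F t - F v * df t))
      by (intros; ring).
    rewrite integral_minus, integral_scal; auto using ex_RInt_scalR. ring. }
  assert (Hrem : Rabs (integral (fun t => df t * (F t - F v)) u v) <= (v - u) * (C * e)).
  { apply integral_abs_le; [lra| |].
    - apply Hex. intros x Hx. apply continuous_multR; [auto|].
      apply (continuous_minus F (fun _ => F v)); [auto|apply continuous_const].
    - intros t Ht. rewrite Rabs_mult. apply Rmult_le_compat; try apply Rabs_pos; auto. }
  assert (Rabs ((f xi - f u) * (F v - F u)) <= C * (v - u) * e).
  { rewrite Rabs_mult. apply Rmult_le_compat; try apply Rabs_pos.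
    - pose proof (Rle_trans _ _ _ (Rabs_pos _) (Hdb u ltac:(lra))). nra.
    - rewrite Rabs_minus_sym. apply Hosc; lra. }
  rewrite Hsplit.
  replace (f xi * (F v - F u) - (f v * F v - f u * F u
             - ((f v - f u) * F v + integral (fun t => df t * (F t - F v)) u v)))
    with ((f xi - f u) * (F v - F u) + integral (fun t => df t * (F t - F v)) u v) by ring.
  eapply Rle_trans; [apply Rabs_triang|]. lra.
Qed.

Lemma RS_integral_by_parts (f df F : R -> R) (a b C : R) :
  a < b ->
  (forall x, a <= x <= b -> is_derive f x (df x)) ->
  (forall x, a <= x <= b -> continuous df x) ->
  (forall x, a <= x <= b -> Rabs (df x) <= C) ->
  (forall x, a <= x <= b -> continuous F x) ->
  RS_integral f F a b (f b * F b - f a * F a - integral (fun t => df t * F t) a b).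
Proof.
  intros Hab Hd Hdc Hdb HF.
  set (H := fun x => f x * F x - integral (fun t => df t * F t) a x).
  replace (f b * F b - f a * F a - integral (fun t => df t * F t) a b) with (H b - H a)
    by (unfold H; rewrite integral_point; ring).
  assert (HC : 0 <= C) by (eapply Rle_trans; [apply Rabs_pos|apply (Hdb a)]; lra).
  assert (UC : uniform_continuity F (fun x => a <= x <= b)).
  { apply Heine; [apply compact_P3|]. intros x Hx. apply continuity_pt_filterlim, HF, Hx. }
  assert (Hex : forall u v, a <= u <= b -> a <= v <= b ->
                  ex_RInt (fun t => df t * F t) u v).
  { intros u v Hu Hv. apply ex_RInt_contR. intros z Hz.
    assert (a <= Rmin u v) by (apply Rmin_glb; lra).
    assert (Rmax u v <= b) by (apply Rmax_lub; lra).
    apply continuous_multR; [apply Hdc|apply HF]; lra. }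
  apply RS_integral_of_local_approx; [exact Hab|]. intros e He.
  assert (He' : 0 < e / (2 * (C + 1))) by (apply Rdiv_lt_0_compat; lra).
  destruct (UC (mkposreal _ He')) as [d Hd_unif]; simpl in Hd_unif.
  exists d. split; [apply cond_pos|]. intros u v xi Hu Hxi Hv Huv.
  assert (Hcell := by_parts_cell f df F u v xi C (e / (2 * (C + 1))) Hxi).
  replace (H v - H u) with (f v * F v - f u * F u - integral (fun t => df t * F t) u v).
  - eapply Rle_trans.
    + apply Hcell; intros x Hx; try (apply Hd || apply Hdc || apply Hdb || apply HF; lra).
      left. apply Hd_unif; try lra. rewrite Rabs_left1; lra.
    + apply Rmult_le_compat_r; [lra|].
      apply Rle_trans with (2 * (C + 1) * (e / (2 * (C + 1)))); [nra|].
      right. field. lra.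
  - unfold H. rewrite <- (integral_Chasles _ a u v) by (apply Hex; lra). ring.
Qed.

(** Limits at [+oo], in the epsilon–B form used by [moment]. *)
Definition tends_at_infty (h : R -> R) (l : R) : Prop :=
  forall eps, 0 < eps -> exists B, forall b, B <= b -> Rabs (h b - l) < eps.

Lemma tends_at_infty_const c : tends_at_infty (fun _ => c) c.
Proof. intros eps He. exists 0. intros b _. rewrite Rminus_diag, Rabs_R0. exact He. Qed.

Lemma tends_at_infty_ext (h1 h2 : R -> R) l B0 :
  (forall b, B0 <= b -> h1 b = h2 b) -> tends_at_infty h1 l -> tends_at_infty h2 l.
Proof.
  intros E H eps He. destruct (H eps He) as [B HB]. exists (Rmax B B0). intros b Hb.
  rewrite <- E by (eapply Rle_trans; [apply Rmax_r|exact Hb]).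
  apply HB. eapply Rle_trans; [apply Rmax_l|exact Hb].
Qed.

Lemma tends_at_infty_plus (h1 h2 : R -> R) l1 l2 :
  tends_at_infty h1 l1 -> tends_at_infty h2 l2 ->
  tends_at_infty (fun b => h1 b + h2 b) (l1 + l2).
Proof.
  intros H1 H2 eps He.
  destruct (H1 (eps / 2)) as [B1 HB1]; [lra|]. destruct (H2 (eps / 2)) as [B2 HB2]; [lra|].
  exists (Rmax B1 B2). intros b Hb.
  specialize (HB1 b (Rle_trans _ _ _ (Rmax_l _ _) Hb)).
  specialize (HB2 b (Rle_trans _ _ _ (Rmax_r _ _) Hb)).
  replace (h1 b + h2 b - (l1 + l2)) with ((h1 b - l1) + (h2 b - l2)) by ring.
  eapply Rle_lt_trans; [apply Rabs_triang|lra].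
Qed.

Lemma tends_at_infty_scal c (h : R -> R) l :
  tends_at_infty h l -> tends_at_infty (fun b => c * h b) (c * l).
Proof.
  intros H eps He. destruct (H (eps / (Rabs c + 1))) as [B HB].
  { apply Rdiv_lt_0_compat; [lra|]. pose proof (Rabs_pos c); lra. }
  exists B. intros b Hb. specialize (HB b Hb).
  rewrite <- Rmult_minus_distr_l, Rabs_mult. pose proof (Rabs_pos c).
  apply Rle_lt_trans with ((Rabs c + 1) * Rabs (h b - l)).
  - pose proof (Rabs_pos (h b - l)). nra.
  - replace eps with ((Rabs c + 1) * (eps / (Rabs c + 1))) by (field; lra).
    apply Rmult_lt_compat_l; lra.
Qed.

Lemma tends_at_infty_inv_bound (h : R -> R) l C :
  (forall b, 1 <= b -> Rabs (h b - l) <= C / b) -> tends_at_infty h l.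
Proof.
  intros Hb eps He. exists (Rmax 1 (2 * Rabs C / eps)). intros b Hb'.
  assert (H1 : 1 <= b) by (eapply Rle_trans; [apply Rmax_l|exact Hb']).
  assert (H2 : 2 * Rabs C / eps <= b) by (eapply Rle_trans; [apply Rmax_r|exact Hb']).
  eapply Rle_lt_trans; [apply Hb, H1|].
  apply Rle_lt_trans with (Rabs C / b).
  - unfold Rdiv. apply Rmult_le_compat_r; [left; apply Rinv_0_lt_compat; lra|apply Rle_abs].
  - apply Rmult_lt_reg_r with b; [lra|]. unfold Rdiv.
    rewrite Rmult_assoc, Rinv_l, Rmult_1_r by lra.
    apply Rmult_le_compat_r with (r := eps) in H2; [|lra].
    replace (2 * Rabs C / eps * eps) with (2 * Rabs C) in H2 by (field; lra).
    pose proof (Rabs_pos C). nra.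
Qed.

Lemma tends_at_infty_monotone (h : R -> R) M :
  (forall x y, 0 <= x <= y -> h x <= h y) -> (forall x, 0 <= x -> h x <= M) ->
  exists l, tends_at_infty h l.
Proof.
  intros Hmono HM.
  set (E := fun z => exists x, 0 <= x /\ z = h x).
  assert (Hbound : bound E) by (exists M; intros z [x [Hx ->]]; apply HM, Hx).
  assert (Hne : exists z, E z) by (exists (h 0), 0; split; [lra|reflexivity]).
  destruct (completeness E Hbound Hne) as [l [Hub Hlub]].
  exists l. intros eps Heps.
  destruct (classic (exists x, 0 <= x /\ l - eps < h x))
    as [[x0 [Hx0 Hlt]]|Hnone].
  - exists x0. intros b Hb.
    assert (h x0 <= h b) by (apply Hmono; lra).
    assert (h b <= l) by (apply Hub; exists b; split; [lra|reflexivity]).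
    apply Rabs_def1; lra.
  - exfalso. assert (l <= l - eps); [|lra].
    apply Hlub. intros z [x [Hx ->]]. apply Rnot_lt_le. intros Hlt.
    apply Hnone. exists x. split; assumption.
Qed.

Lemma integral_limit_of_bound (g : R -> R) C : (forall z, continuous g z) ->
  (forall t, 0 <= t -> 0 <= g t <= C / (1 + t ^ 2)) ->
  exists l, tends_at_infty (fun b => integral g 0 b) l.
Proof.
  intros Hg Hbound.
  assert (Hex : forall x y, ex_RInt g x y) by (intros; apply ex_RInt_contR; intros; apply Hg).
  apply (tends_at_infty_monotone _ (C * (PI / 2))).
  - intros x y Hxy. rewrite <- (integral_Chasles g 0 x y) by apply Hex.
    assert (0 <= integral g x y); [|lra].
    apply integral_ge0; [lra|apply Hex|]. intros t Ht. apply Hbound. lra.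
  - intros b Hb. pose proof (atan_bound b) as Hatan.
    assert (HC : 0 <= C).
    { destruct (Hbound 0 (Rle_refl 0)) as [H0 H1].
      replace (C / (1 + 0 ^ 2)) with C in H1 by (simpl; field). lra. }
    apply Rle_trans with (integral (fun t => C * / (1 + t ^ 2)) 0 b).
    + apply integral_le; [lra|apply Hex| |intros; apply Hbound; lra].
      apply ex_RInt_contR. intros. apply ex_derive_contR. auto_derive. nra.
    + rewrite (integral_FTC (fun t => C * atan t)), atan_0 by
        (lra || (intros; auto_derive; [auto|field; nra]) ||
         (intros; apply ex_derive_contR; auto_derive; nra)).
      assert (C * atan b <= C * (PI / 2)) by (apply Rmult_le_compat_l; lra). lra.
Qed.

Lemma monotone_of_local (h : R -> R) d : 0 < d ->
  (forall x y, 0 <= x <= y -> y - x <= d -> h x <= h y) ->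
  forall x y, 0 <= x <= y -> h x <= h y.
Proof.
  intros Hd Hloc.
  assert (Steps : forall N x y, 0 <= x <= y -> y - x <= INR N * d -> h x <= h y).
  { induction N as [|N IH]; intros x y Hxy Hyx.
    - simpl in Hyx. replace y with x by lra. lra.
    - destruct (Rle_or_lt (y - x) d); [apply Hloc; lra|].
      rewrite S_INR in Hyx. apply Rle_trans with (h (y - d)); [apply IH; lra|apply Hloc; lra]. }
  intros x y Hxy. destruct (archimed_cor1 (d / (y - x + 1))) as [N [HN HN0]].
  { apply Rdiv_lt_0_compat; lra. }
  apply (Steps N); [exact Hxy|].
  assert (0 < INR N) by (apply lt_0_INR; lia).
  apply Rmult_lt_compat_r with (r := INR N * (y - x + 1)) in HN; [|nra].
  replace (/ INR N * (INR N * (y - x + 1))) with (y - x + 1) in HN by (field; lra).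
  replace (d / (y - x + 1) * (INR N * (y - x + 1))) with (INR N * d) in HN by (field; lra).
  lra.
Qed.

(** Moments through integration by parts.  For continuous [F] vanishing on
    (-oo, 0), the n-th moment [∫ t^n dF(t)] over [-1, b] equals
    [b^n F(b) - ∫_0^b n t^(n-1) F(t) dt]. *)
Definition parts_moment (F : R -> R) (n : nat) (b : R) : R :=
  b ^ n * F b - (-1) ^ n * F (-1) - integral (fun t => INR n * t ^ pred n * F t) (-1) b.

Lemma is_derive_pow_id n t : is_derive (fun t => t ^ n) t (INR n * t ^ pred n).
Proof.
  pose proof (is_derive_pow (fun t => t) n t 1 (is_derive_id t)) as H.
  rewrite Rmult_1_r in H. exact H.
Qed.

Lemma pow_le_one t m : 0 <= t <= 1 -> t ^ m <= 1.
Proof. intros H. rewrite <- (pow1 m). apply pow_incr. lra. Qed.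

Lemma continuous_pow n t : continuous (fun t => t ^ n) t.
Proof. apply ex_derive_contR. auto_derive. auto. Qed.

Lemma continuous_pow_deriv n t : continuous (fun t => INR n * t ^ pred n) t.
Proof. apply ex_derive_contR. auto_derive. auto. Qed.

Lemma ex_RInt_pow_deriv_mult (F : R -> R) n x y : (forall z, continuous F z) ->
  ex_RInt (fun t => INR n * t ^ pred n * F t) x y.
Proof.
  intros HF. apply ex_RInt_contR. intros z _.
  apply continuous_multR; [apply continuous_pow_deriv|apply HF].
Qed.

Lemma moment_of_parts_limit (F : R -> R) n m : (forall x, continuous F x) ->
  tends_at_infty (parts_moment F n) m -> moment F n m.
Proof.
  intros HF Hlim. exists (parts_moment F n). split; [|exact Hlim].
  intros b Hb. unfold parts_moment.
  apply RS_integral_by_parts with (C := INR n * (b + 1) ^ pred n); [lra| | | |].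
  - intros; apply is_derive_pow_id.
  - intros; apply continuous_pow_deriv.
  - intros x Hx. rewrite Rabs_mult, <- RPow_abs, (Rabs_right (INR n)) by apply Rle_ge, pos_INR.
    apply Rmult_le_compat_l; [apply pos_INR|].
    apply pow_incr. split; [apply Rabs_pos|apply Rabs_le; lra].
  - intros; apply HF.
Qed.

Lemma parts_moment_lin (F1 F2 : R -> R) c n b :
  (forall x, continuous F1 x) -> (forall x, continuous F2 x) ->
  parts_moment (fun t => F1 t - c * F2 t) n b = parts_moment F1 n b - c * parts_moment F2 n b.
Proof.
  intros H1 H2. unfold parts_moment.
  rewrite (integral_ext _ (fun t => INR n * t ^ pred n * F1 t
                                    - c * (INR n * t ^ pred n * F2 t))) by (intros; ring).
  rewrite integral_minus, integral_scal;
    [ring|apply ex_RInt_pow_deriv_mult; auto|apply ex_RInt_pow_deriv_mult; auto|].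
  apply ex_RInt_scalR, ex_RInt_pow_deriv_mult; auto.
Qed.

Lemma parts_moment_nonneg_support (F : R -> R) n b : 0 <= b ->
  (forall z, continuous F z) -> (forall t, t < 0 -> F t = 0) ->
  parts_moment F n b = b ^ n * F b - integral (fun t => INR n * t ^ pred n * F t) 0 b.
Proof.
  intros Hb HF H0. unfold parts_moment.
  rewrite <- (integral_Chasles _ (-1) 0 b) by (apply ex_RInt_pow_deriv_mult; auto).
  rewrite (integral_ext _ (fun _ => 0)).
  - rewrite (H0 (-1)), integral_const by lra. ring.
  - intros x Hx. rewrite Rmin_left, Rmax_right in Hx by lra. rewrite H0 by lra. ring.
Qed.

Lemma continuous_of_pointwise_lipschitz (f : R -> R) L x : 0 <= L ->
  (forall y, Rabs (f y - f x) <= L * Rabs (y - x)) -> continuous f x.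
Proof.
  intros HL H. apply continuity_pt_filterlim. intros eps He.
  exists (eps / (L + 1)). split; [apply Rdiv_lt_0_compat; lra|].
  intros y [_ Hy]. eapply Rle_lt_trans; [apply H|].
  apply Rle_lt_trans with ((L + 1) * Rabs (y - x)); [pose proof (Rabs_pos (y - x)); nra|].
  apply Rmult_lt_reg_r with (/ (L + 1)); [apply Rinv_0_lt_compat; lra|].
  replace ((L + 1) * Rabs (y - x) * / (L + 1)) with (Rabs (y - x)) by (field; lra). exact Hy.
Qed.

Lemma continuous_eps_delta (f : R -> R) x : continuous f x ->
  forall eps, 0 < eps -> exists d, 0 < d /\
    forall y, Rabs (y - x) < d -> Rabs (f y - f x) < eps.
Proof.
  intros H eps He. apply continuity_pt_filterlim in H.
  destruct (H eps He) as [d [Hd H2]]. exists d. split; [exact Hd|]. intros y Hy.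
  destruct (Req_dec y x) as [->|Hne]; [rewrite Rminus_diag, Rabs_R0; lra|].
  apply H2. split; [split; [exact I|auto]|exact Hy].
Qed.

Lemma sin_increment a b : Rabs (sin b - sin a) <= Rabs (b - a).
Proof.
  destruct (MVT_abs sin cos a b) as [c [Hc _]]; [intros; apply derivable_pt_lim_sin|].
  rewrite Hc. rewrite <- (Rmult_1_l (Rabs (b - a))) at 2.
  apply Rmult_le_compat_r; [apply Rabs_pos|]. apply Rabs_le, COS_bound.
Qed.

Lemma ln_increment x y : 0 < x <= y -> ln y - ln x <= (y - x) / x.
Proof.
  intros H. destruct (MVT_abs ln Rinv x y) as [c [Hc Hc2]].
  { intros c Hc. apply derivable_pt_lim_ln. rewrite Rmin_left in Hc; lra. }
  rewrite Rmin_left, Rmax_right in Hc2 by lra.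
  assert (ln x <= ln y) by (destruct (Req_dec x y) as [->|]; [lra|left; apply ln_increasing; lra]).
  rewrite Rabs_right in Hc by lra. rewrite Hc, (Rabs_right (y - x)), Rabs_right by
    (lra || (left; apply Rinv_0_lt_compat; lra)).
  unfold Rdiv. rewrite Rmult_comm. apply Rmult_le_compat_l; [lra|].
  apply Rinv_le_contravar; lra.
Qed.

Lemma fprod_ext g h N : (forall j, (j < N)%nat -> g j = h j) -> fprod g N = fprod h N.
Proof.
  induction N as [|N IH]; simpl; intros H; [reflexivity|].
  rewrite IH, H; [reflexivity|lia|intros; apply H; lia].
Qed.

Lemma fprod_pos g N : (forall j, 0 < g j) -> 0 < fprod g N.
Proof. induction N; simpl; intros H; [lra|apply Rmult_lt_0_compat; auto]. Qed.

Lemma fprod_mono g h N : (forall j, 0 <= g j <= h j) -> 0 <= fprod g N <= fprod h N.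
Proof.
  induction N as [|N IH]; simpl; intros H; [lra|].
  destruct (IH H). destruct (H N). split; [apply Rmult_le_pos|apply Rmult_le_compat]; lra.
Qed.

Lemma fprod_mult g h N : fprod (fun j => g j * h j) N = fprod g N * fprod h N.
Proof. induction N as [|N IH]; simpl; [ring|rewrite IH; ring]. Qed.

Lemma fprod_shift g N : fprod g (S N) = g 0%nat * fprod (fun j => g (S j)) N.
Proof.
  induction N as [|N IH]; [simpl; ring|].
  change (fprod g (S (S N))) with (fprod g (S N) * g (S N)). rewrite IH. simpl. ring.
Qed.

Lemma inv_one_plus_bounds x : 0 <= x -> 0 < / (1 + x) <= 1.
Proof.
  intros Hx. split; [apply Rinv_0_lt_compat; lra|].
  apply Rmult_le_reg_r with (1 + x); [lra|]. rewrite Rinv_l; lra.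
Qed.

Lemma fprod_inv_le1 x N : (forall j, 0 <= x j) ->
  0 < fprod (fun j => / (1 + x j)) N <= 1.
Proof.
  intros Hx. split.
  - apply fprod_pos. intros j. specialize (Hx j). apply Rinv_0_lt_compat. lra.
  - assert (Hone : fprod (fun _ => 1) N = 1)
      by (induction N as [|N IH]; simpl; [|rewrite IH]; ring).
    refine (Rle_trans _ _ _ (proj2 (fprod_mono _ (fun _ => 1) N _)) (Req_le _ _ Hone)).
    intros j. pose proof (inv_one_plus_bounds (x j) (Hx j)). lra.
Qed.

Lemma fprod_inv_lower x N : (forall j, 0 <= x j) ->
  1 - fsum x N <= fprod (fun j => / (1 + x j)) N.
Proof.
  intros Hx. induction N as [|N IH]; simpl; [lra|].
  destruct (fprod_inv_le1 x N Hx) as [HP0 HP1].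
  set (P := fprod (fun j => / (1 + x j)) N) in *. specialize (Hx N).
  assert (P - x N <= P * / (1 + x N)).
  { apply Rmult_le_reg_r with (1 + x N); [lra|].
    rewrite Rmult_assoc, Rinv_l, Rmult_1_r by lra. nra. }
  lra.
Qed.

Lemma fsum_geom q N : fsum (fun j => q ^ j) N * (1 - q) = 1 - q ^ N.
Proof. induction N as [|N IH]; simpl; [ring|rewrite Rmult_plus_distr_r, IH; ring]. Qed.

Section PartialProducts.
Variables q lam : R.
Hypothesis Hq : 0 < q < 1.
Hypothesis Hlam : 0 < lam.
Local Set Default Proof Using "Hq Hlam".

Local Notation a := (lam * (1 - q)).
Local Notation P := (eq_neg_partial q lam).

Lemma rate_pos : 0 < a.
Proof. apply Rmult_lt_0_compat; lra. Qed.

Lemma factor_nonneg j t : 0 <= t -> 0 <= a * q ^ j * t.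
Proof.
  intros Ht. pose proof rate_pos. assert (0 < q ^ j) by (apply pow_lt; lra).
  apply Rmult_le_pos; [apply Rmult_le_pos|]; lra.
Qed.

Lemma partial_bounds t N : 0 <= t -> 0 < P t N <= 1.
Proof. intros Ht. apply fprod_inv_le1. intros j. apply factor_nonneg, Ht. Qed.

Lemma partial_at_0 N : P 0 N = 1.
Proof.
  unfold eq_neg_partial. induction N as [|N IH]; simpl; [reflexivity|].
  rewrite IH, Rmult_0_r, Rplus_0_r, Rinv_1. ring.
Qed.

(** [P_N(t) >= 1 - lam t], since [sum_j lam (1-q) q^j <= lam]. *)
Lemma partial_lower t N : 0 <= t -> 1 - lam * t <= P t N.
Proof.
  intros Ht. eapply Rle_trans; [|apply fprod_inv_lower; intros j; apply factor_nonneg, Ht].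
  replace (fsum (fun j => a * q ^ j * t) N) with (lam * t * (fsum (fun j => q ^ j) N * (1 - q))).
  - rewrite fsum_geom.
    assert (0 <= lam * t * q ^ N) by (apply Rmult_le_pos; [nra|apply pow_le; lra]). lra.
  - induction N as [|N IH]; simpl; [ring|rewrite <- IH; ring].
Qed.

Lemma partial_antitone x y N : 0 <= x <= y -> P y N <= P x N.
Proof.
  intros H. apply fprod_mono. intros j.
  pose proof (factor_nonneg j x ltac:(lra)). pose proof (factor_nonneg j (y - x) ltac:(lra)).
  split; [left; apply Rinv_0_lt_compat; lra|].
  apply Rinv_le_contravar; [lra|]. nra.
Qed.

Lemma partial_submult x y N : 0 <= x <= y -> P x N * P (y - x) N <= P y N.
Proof.
  intros H. unfold eq_neg_partial. rewrite <- fprod_mult. apply fprod_mono. intros j.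
  pose proof (factor_nonneg j x ltac:(lra)). pose proof (factor_nonneg j (y - x) ltac:(lra)).
  split; [left; apply Rmult_lt_0_compat; apply Rinv_0_lt_compat; lra|].
  rewrite <- Rinv_mult. apply Rinv_le_contravar; [lra|]. nra.
Qed.

Lemma partial_decreasing t N : 0 <= t -> P t (S N) <= P t N.
Proof.
  intros Ht. destruct (partial_bounds t N Ht). pose proof (factor_nonneg N t Ht).
  change (P t (S N)) with (P t N * / (1 + a * q ^ N * t)).
  pose proof (inv_one_plus_bounds _ (factor_nonneg N t Ht)). nra.
Qed.

Lemma partial_shift t N : 0 <= t -> P t (S N) * (1 + a * t) = P (q * t) N.
Proof.
  intros Ht. unfold eq_neg_partial. rewrite fprod_shift.
  rewrite (fprod_ext _ (fun j => / (1 + a * q ^ j * (q * t))))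
    by (intros; simpl; f_equal; ring).
  pose proof (factor_nonneg 0 t Ht). simpl in *. field. lra.
Qed.

Lemma partial_tail t N : 0 <= t -> t ^ N * P t N <= fprod (fun j => / (a * q ^ j)) N.
Proof.
  intros Ht. induction N as [|N IH]; [simpl; unfold eq_neg_partial; simpl; lra|].
  change (P t (S N)) with (P t N * / (1 + a * q ^ N * t)).
  simpl fprod. pose proof rate_pos. assert (Hc : 0 < a * q ^ N) by (apply Rmult_lt_0_compat; [lra|apply pow_lt; lra]).
  replace (t ^ S N * (P t N * / (1 + a * q ^ N * t)))
    with ((t ^ N * P t N) * (t / (1 + a * q ^ N * t))) by (simpl; field; nra).
  destruct (partial_bounds t N Ht).
  apply Rmult_le_compat; [apply Rmult_le_pos; [apply pow_le|]; lra| |exact IH|].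
  - apply Rdiv_le_0_compat; nra.
  - set (c := a * q ^ N) in *.
    replace (t / (1 + c * t)) with (/ c - / (c * (1 + c * t))) by (field; nra).
    assert (0 < / (c * (1 + c * t))) by (apply Rinv_0_lt_compat; nra). lra.
Qed.

End PartialProducts.

Lemma cv_const c : Un_cv (fun _ : nat => c) c.
Proof. intros eps He. exists 0%nat. intros n _. unfold Rdist. rewrite Rminus_diag, Rabs_R0. exact He. Qed.

(** The q-exponential [phi t = e_q(-lam t) = lim_N P_N(t)] on [0, +oo).  Every
    inequality between partial products passes to the limit. *)
Section QExponential.
Variables (q lam : R) (phi : R -> R).
Hypothesis Hq : 0 < q < 1.
Hypothesis Hlam : 0 < lam.
Hypothesis Hphi : forall t, 0 <= t -> Un_cv (eq_neg_partial q lam t) (phi t).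
Local Set Default Proof Using "Hq Hlam Hphi".

Local Notation a := (lam * (1 - q)).
Local Notation P := (eq_neg_partial q lam).

Lemma phi_at_0 : phi 0 = 1.
Proof.
  apply (UL_sequence (P 0)); [apply Hphi; lra|].
  apply (Un_cv_ext (fun _ => 1)); [intros n; symmetry; apply partial_at_0; assumption|apply cv_const].
Qed.

Lemma phi_bounds t : 0 <= t -> 0 <= phi t <= 1.
Proof.
  intros Ht. split.
  - apply (@Rle_cv_lim (fun _ => 0) (P t) 0 (phi t)); [|apply cv_const|apply Hphi, Ht].
    intros n. pose proof (partial_bounds q lam Hq Hlam t n Ht). lra.
  - apply (@Rle_cv_lim (P t) (fun _ => 1) (phi t) 1); [|apply Hphi, Ht|apply cv_const].
    intros n. apply (partial_bounds q lam Hq Hlam t n Ht).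
Qed.

Lemma phi_lower t : 0 <= t -> 1 - lam * t <= phi t.
Proof.
  intros Ht. apply (@Rle_cv_lim (fun _ => 1 - lam * t) (P t) _ (phi t)); [|apply cv_const|apply Hphi, Ht].
  intros n. apply partial_lower; assumption.
Qed.

Lemma phi_antitone x y : 0 <= x <= y -> phi y <= phi x.
Proof.
  intros H. apply (@Rle_cv_lim (P y) (P x) (phi y) (phi x)); [|apply Hphi; lra|apply Hphi; lra].
  intros n. apply partial_antitone; assumption.
Qed.

Lemma phi_submult x y : 0 <= x <= y -> phi x * phi (y - x) <= phi y.
Proof.
  intros H. apply (@Rle_cv_lim (fun n => P x n * P (y - x) n) (P y) (phi x * phi (y - x)) (phi y));
    [|apply CV_mult; apply Hphi; lra|apply Hphi; lra].
  intros n. apply partial_submult; assumption.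
Qed.

Lemma phi_functional t : 0 <= t -> phi (q * t) = (1 + a * t) * phi t.
Proof.
  intros Ht. apply (UL_sequence (P (q * t))); [apply Hphi; nra|].
  apply (Un_cv_ext (fun n => P t (n + 1)%nat * (1 + a * t))).
  - intros n. rewrite Nat.add_1_r. apply partial_shift; assumption.
  - rewrite (Rmult_comm (1 + a * t)). apply CV_mult; [apply CV_shift', Hphi, Ht|apply cv_const].
Qed.

Lemma phi_functional_div t : 0 <= t -> phi t = (1 + a * t / q) * phi (t / q).
Proof.
  intros Ht. replace t with (q * (t / q)) at 1 by (field; lra).
  rewrite phi_functional by (apply Rdiv_le_0_compat; lra). f_equal. field. lra.
Qed.

Lemma phi_decay N : exists C, 0 < C /\ forall t, 0 <= t -> t ^ N * phi t <= C.
Proof.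
  set (C := fprod (fun j => / (a * q ^ j)) N).
  assert (HC : 0 < C).
  { apply fprod_pos. intros j. apply Rinv_0_lt_compat, Rmult_lt_0_compat;
      [apply rate_pos; assumption|apply pow_lt; lra]. }
  exists C. split; [exact HC|]. intros t Ht.
  apply (@Rle_cv_lim (fun n => t ^ N * P t (n + N)%nat) (fun _ => C) (t ^ N * phi t) C);
    [|apply CV_mult; [apply cv_const|apply CV_shift', Hphi, Ht]|apply cv_const].
  intros n. eapply Rle_trans; [|exact (partial_tail q lam Hq Hlam t N Ht)].
  apply Rmult_le_compat_l; [apply pow_le, Ht|].
  induction n as [|n IH]; [apply Rle_refl|].
  eapply Rle_trans; [apply partial_decreasing; assumption|exact IH].
Qed.

(** [phi] is [lam]-Lipschitz: combine submultiplicativity with [phi >= 1 - lam t]. *)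
Lemma phi_increment x y : 0 <= x <= y -> phi x - phi y <= lam * (y - x).
Proof.
  intros H. pose proof (phi_submult x y H). pose proof (phi_lower (y - x) ltac:(lra)).
  pose proof (phi_bounds x ltac:(lra)).
  assert (phi x * (1 - lam * (y - x)) <= phi x * phi (y - x)) by (apply Rmult_le_compat_l; lra).
  assert (0 <= lam * (y - x)) by nra. nra.
Qed.

(** [phi] has no zero: a zero at [t] would propagate, by the functional
    equation, to [q^N t], where [phi >= 1 - lam q^N t > 0]. *)
Lemma phi_pos t : 0 <= t -> 0 < phi t.
Proof.
  intros Ht. destruct (Rle_lt_or_eq_dec 0 (phi t) (proj1 (phi_bounds t Ht))) as [|E]; [assumption|].
  exfalso.
  assert (Zero : forall N, phi (q ^ N * t) = 0).
  { induction N as [|N IH]; [simpl; rewrite Rmult_1_l; auto|].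
    change (q ^ S N) with (q * q ^ N). rewrite Rmult_assoc, phi_functional, IH; [ring|].
    apply Rmult_le_pos; [apply pow_le; lra|exact Ht]. }
  destruct (pow_lt_1_zero q ltac:(rewrite Rabs_right; lra) (/ (2 * lam * (t + 1))))
    as [N HN]; [apply Rinv_0_lt_compat; nra|].
  specialize (HN N (le_n N)). rewrite Rabs_right in HN by (apply Rle_ge, pow_le; lra).
  assert (0 <= q ^ N) by (apply pow_le; lra).
  pose proof (phi_lower (q ^ N * t) ltac:(nra)) as Hlow. rewrite Zero in Hlow.
  assert (q ^ N * (2 * lam * (t + 1)) < 1).
  { apply Rmult_lt_reg_r with (/ (2 * lam * (t + 1))); [apply Rinv_0_lt_compat; nra|].
    rewrite Rmult_assoc, Rinv_r, Rmult_1_r, Rmult_1_l by nra. exact HN. }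
  nra.
Qed.

End QExponential.

Lemma ex_RInt_pos (g : R -> R) x y : 0 < x -> 0 < y ->
  (forall z, 0 < z -> continuous g z) -> ex_RInt g x y.
Proof.
  intros Hx Hy H. apply ex_RInt_contR. intros z Hz. apply H.
  assert (0 < Rmin x y) by (apply Rmin_glb_lt; assumption). lra.
Qed.

Lemma integral_ext_pos (f g : R -> R) x y : 0 < x -> 0 < y ->
  (forall t, 0 < t -> f t = g t) -> integral f x y = integral g x y.
Proof.
  intros Hx Hy H. apply integral_ext. intros t Ht. apply H.
  assert (0 < Rmin x y) by (apply Rmin_glb_lt; assumption). lra.
Qed.

Lemma continuous_div_const (g : R -> R) c z : 0 < c -> 0 < z ->
  (forall u, 0 < u -> continuous g u) -> continuous (fun t => g (t / c)) z.
Proof.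
  intros Hc Hz H. apply (continuous_comp (fun t => t / c) g).
  - apply ex_derive_contR. auto_derive. lra.
  - apply H, Rdiv_lt_0_compat; assumption.
Qed.

Lemma integral_dilate (g : R -> R) c x y : 0 < c -> 0 < x -> 0 < y ->
  (forall z, 0 < z -> continuous g z) ->
  integral (fun t => g (t / c)) x y = c * integral g (x / c) (y / c).
Proof.
  intros Hc Hx Hy Hg.
  assert (E : forall z, / c * z + 0 = z / c) by (intros; field; lra).
  assert (Hex : ex_RInt g (/ c * x + 0) (/ c * y + 0))
    by (rewrite !E; apply ex_RInt_pos; auto; apply Rdiv_lt_0_compat; lra).
  pose proof (RInt_comp_lin g (/ c) 0 x y Hex) as H.
  change (integral (fun t => / c * g (/ c * t + 0)) x y = integral g (/ c * x + 0) (/ c * y + 0))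
    in H.
  rewrite !E, integral_scal in H.
  - rewrite (integral_ext _ (fun t => g (/ c * t + 0))) by (intros; rewrite E; reflexivity).
    rewrite <- H. field. lra.
  - apply ex_RInt_pos; auto. intros z Hz.
    apply (continuous_ext (fun t => g (t / c))); [intros; rewrite E; reflexivity|].
    apply continuous_div_const; auto.
Qed.

(** The log-periodic sine [s t = sin (alpha ln t)], [alpha = -2 pi / ln q], which
    satisfies [s (t / q) = s t]: the source of the moment indeterminacy. *)
Definition log_freq (q : R) : R := - (2 * PI) / ln q.
Definition log_sin (q t : R) : R := sin (log_freq q * ln t).

Section LogSine.
Variable q : R.
Hypothesis Hq : 0 < q < 1.

Local Notation alpha := (log_freq q).
Local Notation s := (log_sin q).

Lemma ln_q_neg : ln q < 0.
Proof. rewrite <- ln_1. apply ln_increasing; lra. Qed.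

Lemma log_freq_pos : 0 < alpha.
Proof.
  unfold log_freq. pose proof ln_q_neg. pose proof PI_RGT_0.
  unfold Rdiv. rewrite <- Ropp_mult_distr_l, <- Ropp_mult_distr_r_reverse.
  apply Rmult_lt_0_compat; [lra|]. apply Ropp_0_gt_lt_contravar, Rinv_lt_0_compat; lra.
Qed.

Lemma log_freq_period t : 0 < t -> alpha * ln (t / q) = alpha * ln t + 2 * INR 1 * PI.
Proof.
  intros Ht. rewrite ln_div by lra. unfold log_freq. pose proof ln_q_neg. simpl. field. lra.
Qed.

Lemma log_sin_periodic t : 0 < t -> s (t / q) = s t.
Proof. intros Ht. unfold log_sin. rewrite log_freq_period by exact Ht. apply sin_period. Qed.

Lemma log_sin_bound t : Rabs (s t) <= 1.
Proof. apply Rabs_le, SIN_bound. Qed.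

Lemma log_sin_continuous t : 0 < t -> continuous s t.
Proof. intros Ht. apply ex_derive_contR. unfold log_sin. auto_derive. lra. Qed.

Lemma log_sin_increment x y : 0 < x <= y -> Rabs (s y - s x) <= alpha * ((y - x) / x).
Proof.
  intros H. pose proof log_freq_pos. unfold log_sin.
  eapply Rle_trans; [apply sin_increment|].
  rewrite <- Rmult_minus_distr_l, Rabs_mult, (Rabs_right alpha) by lra.
  apply Rmult_le_compat_l; [lra|].
  assert (ln x <= ln y) by (destruct (Req_dec x y) as [->|]; [lra|left; apply ln_increasing; lra]).
  rewrite Rabs_right by lra. apply ln_increment, H.
Qed.

Lemma log_freq_ln_q : alpha * ln q = - (2 * PI).
Proof. unfold log_freq. pose proof ln_q_neg. field. lra. Qed.

(** [s t / t] has the log-periodic primitive [- cos (alpha ln t) / alpha], so it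
    integrates to [0] over every period [q x, x]. *)
Lemma integral_log_sin_period x : 0 < x -> integral (fun t => s t / t) (q * x) x = 0.
Proof.
  intros Hx. pose proof log_freq_pos.
  assert (Hqx : 0 < q * x) by nra.
  rewrite (integral_FTC (fun t => - cos (alpha * ln t) / alpha)); [|nra| |].
  - replace (alpha * ln x) with (alpha * ln (q * x) + 2 * INR 1 * PI).
    + rewrite cos_period. field. lra.
    + rewrite ln_mult, Rmult_plus_distr_l, log_freq_ln_q by lra. simpl. ring.
  - intros z Hz. unfold log_sin. auto_derive; [lra|]. field. split; lra.
  - intros z Hz. unfold Rdiv. apply continuous_multR; [apply log_sin_continuous; lra|].
    apply ex_derive_contR. auto_derive. lra.
Qed.

End LogSine.

(** [A x y] tends to [0] as [x -> 0+] and [y -> +oo] jointly; for [A = ∫_x^y f]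
    this says that the improper integral of [f] over (0, +oo) is [0]. *)
Definition vanishes_at_0_infty (A : R -> R -> R) : Prop :=
  forall eps, 0 < eps -> exists d B, 0 < d /\ 0 < B /\
    forall x y, 0 < x <= d -> B <= y -> Rabs (A x y) <= eps.

Lemma vanishes_of_bound (A : R -> R -> R) K1 K2 : 0 <= K1 -> 0 <= K2 ->
  (forall x y, 0 < x -> 0 < y -> Rabs (A x y) <= K1 * x + K2 / y) ->
  vanishes_at_0_infty A.
Proof.
  intros HK1 HK2 Hb eps He.
  exists (eps / (2 * (K1 + 1))), (2 * (K2 + 1) / eps).
  split; [apply Rdiv_lt_0_compat; lra|]. split; [apply Rdiv_lt_0_compat; lra|].
  intros x y Hx Hy.
  assert (Hy0 : 0 < y) by (eapply Rlt_le_trans; [|exact Hy]; apply Rdiv_lt_0_compat; lra).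
  eapply Rle_trans; [apply Hb; lra|].
  assert (K1 * x <= eps / 2).
  { apply Rle_trans with ((K1 + 1) * (eps / (2 * (K1 + 1)))); [nra|].
    right. field. lra. }
  assert (K2 / y <= eps / 2).
  { apply Rmult_le_reg_r with y; [lra|]. unfold Rdiv at 1.
    rewrite Rmult_assoc, Rinv_l, Rmult_1_r by lra.
    apply Rmult_le_compat_l with (r := eps / 2) in Hy; [|lra].
    replace (eps / 2 * (2 * (K2 + 1) / eps)) with (K2 + 1) in Hy by (field; lra). lra. }
  lra.
Qed.

Lemma vanishes_dilate_comb (A B : R -> R -> R) c c1 c2 : 0 < c < 1 ->
  vanishes_at_0_infty A ->
  (forall x y, 0 < x -> 0 < y -> B x y = c1 * A (c * x) (c * y) + c2 * A x y) ->
  vanishes_at_0_infty B.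
Proof.
  intros Hc HA HB eps He.
  set (M := Rabs c1 + Rabs c2 + 1).
  assert (HM : 0 < M) by (unfold M; pose proof (Rabs_pos c1); pose proof (Rabs_pos c2); lra).
  destruct (HA (eps / M)) as (d & B0 & Hd & HB0 & Hsmall); [apply Rdiv_lt_0_compat; lra|].
  exists d, (B0 / c). split; [exact Hd|]. split; [apply Rdiv_lt_0_compat; lra|].
  intros x y Hx Hy.
  assert (HB0c : B0 <= B0 / c) by (apply Rmult_le_reg_r with c; [lra|]; field_simplify; nra).
  assert (Hcy : B0 <= c * y).
  { apply Rmult_le_compat_l with (r := c) in Hy; [|lra].
    replace (c * (B0 / c)) with B0 in Hy by (field; lra). exact Hy. }
  assert (H1 := Hsmall (c * x) (c * y) ltac:(split; nra) Hcy).
  assert (H2 := Hsmall x y Hx ltac:(lra)).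
  rewrite HB by lra. eapply Rle_trans; [apply Rabs_triang|]. rewrite !Rabs_mult.
  pose proof (Rabs_pos c1). pose proof (Rabs_pos c2).
  apply Rle_trans with ((Rabs c1 + Rabs c2) * (eps / M)).
  - assert (Rabs c1 * Rabs (A (c * x) (c * y)) <= Rabs c1 * (eps / M)) by (apply Rmult_le_compat_l; lra).
    assert (Rabs c2 * Rabs (A x y) <= Rabs c2 * (eps / M)) by (apply Rmult_le_compat_l; lra).
    lra.
  - assert (0 < eps / M) by (apply Rdiv_lt_0_compat; lra).
    apply Rle_trans with (M * (eps / M)); [apply Rmult_le_compat_r; [lra|unfold M; lra]|].
    right. field. lra.
Qed.

Definition survival (F : R -> R) (t : R) : R := 1 - F t.

Definition perturbation (q : R) (F : R -> R) (t : R) : R := log_sin q t * (F (t / q) - F t).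

Section Perturbation.
Variables (q lam : R) (FX : R -> R).
Hypothesis Hq : 0 < q < 1.
Hypothesis Hlam : 0 < lam.
Hypothesis HFneg : forall t, t < 0 -> FX t = 0.
Hypothesis Hlim : forall t, 0 <= t -> Un_cv (eq_neg_partial q lam t) (1 - FX t).
Local Set Default Proof Using "Hq Hlam HFneg Hlim".

Local Notation a := (lam * (1 - q)).
Local Notation phi := (survival FX).
Local Notation s := (log_sin q).
Local Notation alpha := (log_freq q).
Local Notation K := (perturbation q FX).

Lemma FX_at_0 : FX 0 = 0.
Proof. pose proof (phi_at_0 q lam phi Hq Hlam Hlim). unfold survival in *. lra. Qed.

Lemma FX_increment x y : Rabs (FX y - FX x) <= lam * Rabs (y - x).
Proof.
  assert (Hord : forall x y, x <= y -> Rabs (FX y - FX x) <= lam * (y - x)).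
  { clear x y. intros x y Hxy.
    assert (Hnn : forall u v, 0 <= u <= v -> 0 <= FX v - FX u <= lam * (v - u)).
    { intros u v Huv. pose proof (phi_increment q lam phi Hq Hlam Hlim u v Huv).
      pose proof (phi_antitone q lam phi Hq Hlam Hlim u v Huv). unfold survival in *. lra. }
    destruct (Rlt_or_le y 0) as [Hy|Hy].
    - rewrite !HFneg, Rminus_diag, Rabs_R0 by lra. nra.
    - destruct (Rlt_or_le x 0) as [Hx|Hx].
      + rewrite (HFneg x), <- FX_at_0 by lra. destruct (Hnn 0 y) as [H1 H2]; [lra|].
        rewrite Rabs_right by lra. nra.
      + destruct (Hnn x y) as [H1 H2]; [lra|]. rewrite Rabs_right; lra. }
  destruct (Rle_or_lt x y) as [Hxy|Hxy].
  - rewrite (Rabs_right (y - x)) by lra. apply Hord, Hxy.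
  - rewrite Rabs_minus_sym, (Rabs_minus_sym y x), (Rabs_right (x - y)) by lra. apply Hord. lra.
Qed.

Lemma FX_continuous x : continuous FX x.
Proof. apply (continuous_of_pointwise_lipschitz _ lam); [lra|intros; apply FX_increment]. Qed.

Lemma phi_continuous x : continuous phi x.
Proof.
  unfold survival. apply (continuous_minus (fun _ => 1) FX); [apply continuous_const|].
  apply FX_continuous.
Qed.

Lemma K_nonpos t : t <= 0 -> K t = 0.
Proof.
  intros Ht. unfold perturbation. destruct (Req_dec t 0) as [->|Hne].
  - unfold Rdiv. rewrite Rmult_0_l, FX_at_0. ring.
  - rewrite !HFneg; [ring|lra|]. apply Rdiv_neg_pos; lra.
Qed.

Lemma FX_jump t : 0 <= t -> FX (t / q) - FX t = a * t / q * phi (t / q).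
Proof.
  intros Ht. pose proof (phi_functional_div q lam phi Hq Hlam Hlim t Ht) as E.
  unfold survival in *. replace (FX (t / q) - FX t) with ((1 - FX t) - (1 - FX (t / q))) by ring.
  rewrite E. ring.
Qed.

Lemma le_div_q z : 0 <= z -> z <= z / q.
Proof.
  intros Hz. unfold Rdiv. rewrite <- (Rmult_1_r z) at 1. apply Rmult_le_compat_l; [exact Hz|].
  rewrite <- Rinv_1. apply Rinv_le_contravar; lra.
Qed.

Lemma inv_q_minus_1_pos : 0 < / q - 1.
Proof. assert (1 < / q) by (rewrite <- Rinv_1; apply Rinv_lt_contravar; lra). lra. Qed.

Lemma K_abs t : Rabs (K t) <= lam * (/ q - 1) * Rabs t.
Proof.
  unfold perturbation. rewrite Rabs_mult. pose proof inv_q_minus_1_pos.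
  apply Rle_trans with (1 * Rabs (FX (t / q) - FX t)).
  - apply Rmult_le_compat_r; [apply Rabs_pos|apply log_sin_bound].
  - rewrite Rmult_1_l. eapply Rle_trans; [apply FX_increment|].
    replace (t / q - t) with ((/ q - 1) * t) by (field; lra).
    rewrite Rabs_mult, (Rabs_right (/ q - 1)) by lra. lra.
Qed.

(** [K] is continuous: on (0, +oo) as a product of continuous functions, and at
    points [x <= 0] because [|K y - K x| = |K y| <= lam (1/q - 1) |y - x|]. *)
Lemma K_continuous t : continuous K t.
Proof.
  destruct (Rlt_or_le 0 t) as [Ht|Ht].
  - unfold perturbation. apply continuous_multR; [apply log_sin_continuous; assumption|].
    apply (continuous_minus (fun y => FX (y / q)) FX); [|apply FX_continuous].
    apply (continuous_comp (fun y => y / q) FX); [|apply FX_continuous].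
    apply ex_derive_contR. auto_derive. lra.
  - pose proof inv_q_minus_1_pos.
    apply (continuous_of_pointwise_lipschitz _ (lam * (/ q - 1))); [nra|]. intros y.
    rewrite (K_nonpos t Ht), Rminus_0_r. destruct (Rle_or_lt y 0).
    + rewrite (K_nonpos y), Rabs_R0 by lra. apply Rmult_le_pos; [nra|apply Rabs_pos].
    + eapply Rle_trans; [apply K_abs|]. apply Rmult_le_compat_l; [nra|].
      rewrite !Rabs_right by lra. lra.
Qed.

Definition osc_moment (m : nat) (x y : R) : R := integral (fun t => t ^ m * s t * phi t) x y.
Definition osc_log (x y : R) : R := integral (fun t => s t * phi t / t) x y.

Lemma osc_moment_integrand_continuous m z : 0 < z ->
  continuous (fun t => t ^ m * s t * phi t) z.
Proof.
  intros Hz. apply continuous_multR; [apply continuous_multR|apply phi_continuous].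
  - apply continuous_pow.
  - apply log_sin_continuous, Hz.
Qed.

Lemma osc_log_integrand_continuous z : 0 < z -> continuous (fun t => s t * phi t / t) z.
Proof.
  intros Hz. unfold Rdiv. apply continuous_multR; [apply continuous_multR|].
  - apply log_sin_continuous, Hz.
  - apply phi_continuous.
  - apply ex_derive_contR. auto_derive. lra.
Qed.

Lemma ex_RInt_K_moment m x y : ex_RInt (fun t => t ^ m * K t) x y.
Proof.
  apply ex_RInt_contR. intros z _. apply continuous_multR; [apply continuous_pow|].
  apply K_continuous.
Qed.

(** Splitting [K = s (phi - phi(. / q))] and dilating the second part. *)
Lemma K_moment_split m x y : 0 < x -> 0 < y ->
  integral (fun t => t ^ m * K t) x y = osc_moment m x y - q ^ S m * osc_moment m (x / q) (y / q).
Proof.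
  intros Hx Hy. unfold osc_moment. set (g := fun t => t ^ m * s t * phi t).
  assert (Hg : forall z, 0 < z -> continuous g z)
    by (intros; apply osc_moment_integrand_continuous; assumption).
  assert (Ex : ex_RInt g x y) by (apply ex_RInt_pos; assumption).
  assert (Exq : ex_RInt (fun t => g (t / q)) x y)
    by (apply ex_RInt_pos; [..|intros; apply continuous_div_const]; auto; lra).
  replace (q ^ S m * integral g (x / q) (y / q)) with (q ^ m * integral (fun t => g (t / q)) x y)
    by (rewrite integral_dilate by (auto; lra); simpl; ring).
  rewrite <- integral_scal, <- integral_minus by auto using ex_RInt_scalR.
  apply integral_ext_pos; [assumption..|]. intros t Ht. unfold g, perturbation, survival.
  rewrite log_sin_periodic by (lra || assumption).
  unfold Rdiv. rewrite Rpow_mult_distr, pow_inv. field. apply pow_nonzero. lra.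
Qed.

(** Rewriting [K] through the functional equation of [phi] instead. *)
Lemma K_moment_shift m x y : 0 < x -> 0 < y ->
  integral (fun t => t ^ m * K t) x y = a * q ^ S m * osc_moment (S m) (x / q) (y / q).
Proof.
  intros Hx Hy. unfold osc_moment. set (g := fun t => t ^ S m * s t * phi t).
  assert (Hg : forall z, 0 < z -> continuous g z)
    by (intros; apply osc_moment_integrand_continuous; assumption).
  assert (Exq : ex_RInt (fun t => g (t / q)) x y)
    by (apply ex_RInt_pos; [..|intros; apply continuous_div_const]; auto; lra).
  replace (a * q ^ S m * integral g (x / q) (y / q))
    with ((a * q ^ m) * integral (fun t => g (t / q)) x y)
    by (rewrite integral_dilate by (auto; lra); simpl; ring).
  rewrite <- integral_scal by exact Exq.
  apply integral_ext_pos; [assumption..|]. intros t Ht. unfold g, perturbation.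
  rewrite FX_jump, log_sin_periodic by (lra || assumption).
  unfold Rdiv. rewrite Rpow_mult_distr, pow_inv. simpl. field. repeat split; try lra; apply pow_nonzero; lra.
Qed.

(** Comparing the two expressions gives a recurrence in [m]. *)
Lemma osc_moment_recurrence m x y : 0 < x -> 0 < y ->
  osc_moment (S m) x y
  = / (a * q ^ S m) * osc_moment m (q * x) (q * y) + (- / a) * osc_moment m x y.
Proof.
  intros Hx Hy. pose proof (rate_pos q lam Hq Hlam). assert (0 < q ^ S m) by (apply pow_lt; lra).
  pose proof (K_moment_split m (q * x) (q * y) ltac:(nra) ltac:(nra)) as E1.
  rewrite K_moment_shift in E1 by nra.
  replace (q * x / q) with x in E1 by (field; lra). replace (q * y / q) with y in E1 by (field; lra).
  apply Rmult_eq_reg_l with (a * q ^ S m); [|nra].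
  rewrite E1. field. split; lra.
Qed.

(** The [m = 0] analogue, through the logarithmic integral. *)
Lemma osc_log_dilate x y : 0 < x -> 0 < y ->
  osc_log x y - osc_log (x / q) (y / q) = a * osc_moment 0 (x / q) (y / q).
Proof.
  intros Hx Hy. unfold osc_log, osc_moment.
  set (gB := fun t => s t * phi t / t). set (gA := fun t => t ^ 0 * s t * phi t).
  assert (HgB : forall z, 0 < z -> continuous gB z)
    by (intros; apply osc_log_integrand_continuous; assumption).
  assert (HgA : forall z, 0 < z -> continuous gA z)
    by (intros; apply osc_moment_integrand_continuous; assumption).
  assert (ExB : ex_RInt gB x y) by (apply ex_RInt_pos; assumption).
  assert (ExBq : ex_RInt (fun t => gB (t / q)) x y)
    by (apply ex_RInt_pos; [..|intros; apply continuous_div_const]; auto; lra).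
  assert (ExAq : ex_RInt (fun t => gA (t / q)) x y)
    by (apply ex_RInt_pos; [..|intros; apply continuous_div_const]; auto; lra).
  replace (integral gB (x / q) (y / q)) with (/ q * integral (fun t => gB (t / q)) x y)
    by (rewrite integral_dilate by (auto; lra); field; lra).
  replace (a * integral gA (x / q) (y / q)) with (a / q * integral (fun t => gA (t / q)) x y)
    by (rewrite integral_dilate by (auto; lra); field; lra).
  rewrite <- !integral_scal, <- integral_minus by auto using ex_RInt_scalR.
  apply integral_ext_pos; [assumption..|]. intros t Ht. unfold gA, gB.
  rewrite log_sin_periodic by (lra || assumption).
  pose proof (FX_jump t ltac:(lra)) as J. unfold survival in *.
  replace (1 - FX t) with ((1 - FX (t / q)) + (FX (t / q) - FX t)) by ring.
  rewrite J. simpl. field. lra.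
Qed.

Lemma osc_moment_0_from_log x y : 0 < x -> 0 < y ->
  osc_moment 0 x y = / a * (osc_log (q * x) x - osc_log (q * y) y).
Proof.
  intros Hx Hy. pose proof (rate_pos q lam Hq Hlam).
  pose proof (osc_log_dilate (q * x) (q * y) ltac:(nra) ltac:(nra)) as E.
  replace (q * x / q) with x in E by (field; lra). replace (q * y / q) with y in E by (field; lra).
  assert (Ex : forall u v, 0 < u -> 0 < v -> ex_RInt (fun t => s t * phi t / t) u v)
    by (intros; apply ex_RInt_pos; auto; intros; apply osc_log_integrand_continuous; auto).
  unfold osc_log in *.
  rewrite <- (integral_Chasles _ (q * x) x (q * y)), <- (integral_Chasles _ x (q * y) y) in E
    by (apply Ex; nra).
  apply Rmult_eq_reg_l with a; [|lra]. rewrite <- E. field. lra.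
Qed.

Lemma osc_log_period_far y : 0 < y -> Rabs (osc_log (q * y) y) <= (/ q - 1) * phi (q * y).
Proof.
  intros Hy. unfold osc_log. assert (Hqy : 0 < q * y) by nra.
  replace ((/ q - 1) * phi (q * y)) with ((y - q * y) * (phi (q * y) / (q * y))) by (field; lra).
  apply integral_abs_le; [nra|apply ex_RInt_pos; auto; intros; apply osc_log_integrand_continuous; auto|].
  intros t Ht. unfold Rdiv. rewrite !Rabs_mult.
  pose proof (log_sin_bound q t). pose proof (phi_bounds q lam phi Hq Hlam Hlim t ltac:(lra)).
  pose proof (phi_antitone q lam phi Hq Hlam Hlim (q * y) t ltac:(lra)).
  rewrite (Rabs_right (phi t)), (Rabs_right (/ t)) by (lra || (left; apply Rinv_0_lt_compat; lra)).
  assert (/ t <= / (q * y)) by (apply Rinv_le_contravar; lra).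
  assert (0 < / t) by (apply Rinv_0_lt_compat; lra).
  apply Rle_trans with (1 * phi t * / t).
  - apply Rmult_le_compat_r; [lra|]. apply Rmult_le_compat_r; lra.
  - rewrite Rmult_1_l. apply Rmult_le_compat; lra.
Qed.

(** On a period [q x, x] near [0], [phi = 1 + O(t)] and [∫ s / t = 0] over the
    period, so [B] is [O(x)]. *)
Lemma osc_log_period_near x : 0 < x -> Rabs (osc_log (q * x) x) <= (/ q - 1) * lam * q * x.
Proof.
  intros Hx. unfold osc_log. assert (Hqx : 0 < q * x) by nra.
  assert (Cont : forall z, 0 < z -> continuous (fun t => s t / t) z).
  { intros z Hz. unfold Rdiv. apply continuous_multR; [apply log_sin_continuous; auto|].
    apply ex_derive_contR. auto_derive. lra. }
  assert (Cont' : forall z, 0 < z -> continuous (fun t => s t * (phi t - 1) / t) z).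
  { intros z Hz. unfold Rdiv. apply continuous_multR; [apply continuous_multR|].
    - apply log_sin_continuous, Hz.
    - apply (continuous_minus phi (fun _ => 1)); [apply phi_continuous|apply continuous_const].
    - apply ex_derive_contR. auto_derive. lra. }
  rewrite (integral_ext_pos _ (fun t => s t * (phi t - 1) / t + s t / t)) by
    (auto || (intros; field; lra)).
  rewrite integral_plus, integral_log_sin_period, Rplus_0_r by
    (auto || (apply ex_RInt_pos; auto)).
  replace ((/ q - 1) * lam * q * x) with ((x - q * x) * lam) by (field; lra).
  apply integral_abs_le; [nra|apply ex_RInt_pos; auto|].
  intros t Ht. unfold Rdiv. rewrite !Rabs_mult.
  pose proof (log_sin_bound q t). pose proof (phi_at_0 q lam phi Hq Hlam Hlim) as H0.
  pose proof (phi_increment q lam phi Hq Hlam Hlim 0 t ltac:(lra)).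
  pose proof (phi_bounds q lam phi Hq Hlam Hlim t ltac:(lra)).
  rewrite H0 in *. rewrite (Rabs_left1 (phi t - 1)), (Rabs_right (/ t)) by
    (lra || (left; apply Rinv_0_lt_compat; lra)).
  assert (0 < / t) by (apply Rinv_0_lt_compat; lra).
  apply Rle_trans with (1 * (lam * t) * / t).
  - apply Rmult_le_compat_r; [lra|]. apply Rmult_le_compat; try lra; apply Rabs_pos.
  - right. field. lra.
Qed.

(** [∫_0^oo s phi = 0]: the logarithmic integral telescopes over periods. *)
Lemma osc_moment_0_vanishes : vanishes_at_0_infty (osc_moment 0).
Proof.
  destruct (phi_decay q lam phi Hq Hlam Hlim 1) as [C [HC Hdecay]].
  pose proof (rate_pos q lam Hq Hlam). pose proof inv_q_minus_1_pos.
  apply (vanishes_of_bound _ ((/ q - 1) * lam * q / a) ((/ q - 1) * (C / q) / a)).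
  { apply Rdiv_le_0_compat; [|lra]. apply Rmult_le_pos; [nra|lra]. }
  { apply Rdiv_le_0_compat; [|lra]. apply Rmult_le_pos; [lra|]. apply Rdiv_le_0_compat; lra. }
  intros x y Hx Hy. rewrite osc_moment_0_from_log by assumption.
  rewrite Rabs_mult, Rabs_right by (left; apply Rinv_0_lt_compat; lra).
  assert (Hfar : phi (q * y) <= C / q / y).
  { specialize (Hdecay (q * y) ltac:(nra)). simpl in Hdecay. rewrite Rmult_1_r in Hdecay.
    apply Rmult_le_reg_l with (q * y); [nra|]. replace (q * y * (C / q / y)) with C
      by (field; lra). exact Hdecay. }
  pose proof (osc_log_period_near x Hx). pose proof (osc_log_period_far y Hy).
  apply Rle_trans with (/ a * ((/ q - 1) * lam * q * x + (/ q - 1) * (C / q / y))).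
  - apply Rmult_le_compat_l; [left; apply Rinv_0_lt_compat; lra|].
    unfold Rminus. eapply Rle_trans; [apply Rabs_triang|]. rewrite Rabs_Ropp.
    assert ((/ q - 1) * phi (q * y) <= (/ q - 1) * (C / q / y)) by (apply Rmult_le_compat_l; lra).
    lra.
  - right. field. lra.
Qed.

Lemma osc_moment_vanishes m : vanishes_at_0_infty (osc_moment m).
Proof.
  induction m as [|m IH]; [apply osc_moment_0_vanishes|].
  apply (vanishes_dilate_comb (osc_moment m) _ q (/ (a * q ^ S m)) (- / a));
    [assumption|exact IH|apply osc_moment_recurrence].
Qed.

Lemma K_moment_near_0 m d : 0 <= d <= 1 ->
  Rabs (integral (fun t => t ^ m * K t) 0 d) <= d * (lam * (/ q - 1) * d).
Proof.
  intros Hd. pose proof inv_q_minus_1_pos.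
  replace (d * (lam * (/ q - 1) * d)) with ((d - 0) * (lam * (/ q - 1) * d)) by ring.
  apply integral_abs_le; [lra|apply ex_RInt_K_moment|]. intros t Ht.
  assert (Hpow : 0 <= t ^ m <= 1)
    by (split; [apply pow_le; lra|apply pow_le_one; lra]).
  rewrite Rabs_mult, (Rabs_right (t ^ m)) by lra.
  pose proof (K_abs t) as Hk. rewrite (Rabs_right t) in Hk by lra.
  apply Rle_trans with (1 * (lam * (/ q - 1) * t)).
  - apply Rmult_le_compat; try lra; apply Rabs_pos.
  - rewrite Rmult_1_l. apply Rmult_le_compat_l; [nra|lra].
Qed.

Lemma K_moments_vanish m : tends_at_infty (fun b => integral (fun t => t ^ m * K t) 0 b) 0.
Proof.
  intros eps He. pose proof inv_q_minus_1_pos.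
  set (c := lam * (/ q - 1)). assert (Hc : 0 < c) by (unfold c; nra).
  destruct (osc_moment_vanishes m (eps / 4)) as (d & B & Hd & HB & Hsmall); [lra|].
  set (de := Rmin 1 (Rmin (q * d) (eps / (4 * c)))).
  assert (Hde : 0 < de)
    by (unfold de; repeat apply Rmin_glb_lt; try apply Rdiv_lt_0_compat; nra).
  assert (Hde1 : de <= 1) by apply Rmin_l.
  assert (Hde2 : de <= q * d) by (eapply Rle_trans; [apply Rmin_r|apply Rmin_l]).
  assert (Hde3 : de <= eps / (4 * c)) by (eapply Rle_trans; [apply Rmin_r|apply Rmin_r]).
  exists B. intros b Hb. rewrite Rminus_0_r.
  rewrite <- (integral_Chasles _ 0 de b), (K_moment_split m de b) by (apply ex_RInt_K_moment || lra).
  assert (A0 : Rabs (integral (fun t => t ^ m * K t) 0 de) <= eps / 4).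
  { eapply Rle_trans; [apply K_moment_near_0; lra|]. fold c.
    apply Rle_trans with (1 * (c * (eps / (4 * c)))); [apply Rmult_le_compat; nra|].
    right. field. lra. }
  assert (A1 : Rabs (osc_moment m de b) <= eps / 4) by (apply Hsmall; nra).
  assert (A2 : Rabs (osc_moment m (de / q) (b / q)) <= eps / 4).
  { apply Hsmall.
    - split; [apply Rdiv_lt_0_compat; lra|]. apply Rmult_le_reg_r with q; [lra|].
      unfold Rdiv. rewrite Rmult_assoc, Rinv_l by lra. lra.
    - apply Rmult_le_reg_r with q; [lra|]. unfold Rdiv. rewrite Rmult_assoc, Rinv_l by lra. nra. }
  assert (Hqm : 0 < q ^ S m <= 1) by (split; [apply pow_lt|apply pow_le_one]; lra).
  unfold Rminus. eapply Rle_lt_trans; [apply Rabs_triang|].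
  eapply Rle_lt_trans; [apply Rplus_le_compat_l, Rabs_triang|].
  rewrite Rabs_Ropp, Rabs_mult, (Rabs_right (q ^ S m)) by lra.
  assert (q ^ S m * Rabs (osc_moment m (de / q) (b / q)) <= eps / 4)
    by (apply Rle_trans with (1 * (eps / 4)); [apply Rmult_le_compat; try lra; apply Rabs_pos|lra]).
  lra.
Qed.

(** [|K t| <= phi t] for [t >= 0], since the jump [FX (t / q) - FX t] equals
    [phi t - phi (t / q)] and is nonnegative. *)
Lemma K_abs_le_phi t : 0 <= t -> Rabs (K t) <= phi t.
Proof.
  intros Ht. unfold perturbation. rewrite Rabs_mult.
  assert (Hq' : 0 <= t / q) by (apply Rdiv_le_0_compat; lra).
  pose proof (phi_bounds q lam phi Hq Hlam Hlim (t / q) Hq').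
  pose proof (FX_jump t Ht). pose proof (rate_pos q lam Hq Hlam).
  assert (0 <= a * t / q) by (apply Rdiv_le_0_compat; nra).
  assert (0 <= FX (t / q) - FX t) by nra.
  assert (FX (t / q) - FX t <= phi t) by (unfold survival in *; lra).
  rewrite (Rabs_right (FX (t / q) - FX t)) by lra.
  apply Rle_trans with (1 * (FX (t / q) - FX t)); [|lra].
  apply Rmult_le_compat_r; [lra|apply log_sin_bound].
Qed.

(** [osc_const] bounds the oscillation of [K] relative to [FX] on short steps
    (see [K_increment]); the perturbation size [1 / osc_const] keeps [G]
    nondecreasing. *)
Definition osc_const : R := 2 + 2 * (1 + alpha) / q.
Definition perturb_size : R := / osc_const.

Definition GX (t : R) : R := FX t - perturb_size * K t.

Lemma osc_const_pos : 2 <= osc_const.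
Proof.
  unfold osc_const. pose proof (log_freq_pos q Hq).
  assert (0 < 2 * (1 + alpha) / q) by (apply Rdiv_lt_0_compat; lra). lra.
Qed.

Lemma perturb_size_bounds : 0 < perturb_size /\ perturb_size * osc_const = 1.
Proof.
  pose proof osc_const_pos. unfold perturb_size.
  split; [apply Rinv_0_lt_compat; lra|apply Rinv_l; lra].
Qed.

Lemma phi_drop_lower x y : 0 <= x <= y -> lam * (y - x) <= / 2 ->
  a / 2 * (y - x) * phi (x / q) <= phi x - phi y.
Proof.
  intros Hxy Hstep. pose proof (rate_pos q lam Hq Hlam).
  assert (Hxq : 0 <= x / q) by (apply Rdiv_le_0_compat; lra).
  pose proof (phi_bounds q lam phi Hq Hlam Hlim (x / q) Hxq).
  assert (Hmono : (1 + a * y) * phi y <= (1 + a * x) * phi x).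
  { rewrite <- !(phi_functional q lam phi Hq Hlam Hlim) by lra.
    apply (phi_antitone q lam phi Hq Hlam Hlim). nra. }
  assert (Hhalf : phi x / 2 <= phi y).
  { pose proof (phi_submult q lam phi Hq Hlam Hlim x y Hxy).
    pose proof (phi_lower q lam phi Hq Hlam Hlim (y - x) ltac:(lra)).
    pose proof (phi_bounds q lam phi Hq Hlam Hlim x ltac:(lra)). nra. }
  assert (Hu : (1 + a * x) * phi (x / q) <= phi x).
  { rewrite (phi_functional_div q lam phi Hq Hlam Hlim x) by lra.
    apply Rmult_le_compat_r; [lra|].
    assert (a * x <= a * x / q) by (apply le_div_q; nra). lra. }
  apply Rmult_le_reg_l with (1 + a * x); [nra|].
  assert (0 <= a * (y - x)) by nra. nra.
Qed.

Lemma jump_step x y : 0 <= x <= y -> lam * (y - x) <= / 2 ->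
  Rabs ((FX (y / q) - FX y) - (FX (x / q) - FX x)) <= (2 + 2 / q) * (FX y - FX x).
Proof.
  intros Hxy Hstep. pose proof (rate_pos q lam Hq Hlam).
  assert (Hxq : 0 <= x / q) by (apply Rdiv_le_0_compat; lra).
  set (u := phi (x / q)). set (v := phi (y / q)).
  assert (Hu : 0 <= u) by apply (phi_bounds q lam phi Hq Hlam Hlim _ Hxq).
  assert (Hvu : v <= u).
  { apply (phi_antitone q lam phi Hq Hlam Hlim). split; [exact Hxq|].
    apply Rmult_le_compat_r; [left; apply Rinv_0_lt_compat|]; lra. }
  assert (Fx : phi x = (1 + a * x / q) * u) by apply (phi_functional_div q lam phi Hq Hlam Hlim x), Hxy.
  assert (Fy : phi y = (1 + a * y / q) * v) by (apply (phi_functional_div q lam phi Hq Hlam Hlim y); lra).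
  assert (Hdrop : a / 2 * (y - x) * u <= phi x - phi y) by (apply phi_drop_lower; assumption).
  assert (Huv : u - v <= (phi x - phi y) + a / q * (y - x) * u).
  { assert (0 <= a * x / q) by (apply Rdiv_le_0_compat; nra).
    assert (a / q * (y - x) * v <= a / q * (y - x) * u)
      by (apply Rmult_le_compat_l; [apply Rmult_le_pos; [apply Rdiv_le_0_compat|]|]; lra).
    assert ((1 + a * x / q) * (u - v) = (phi x - phi y) + a / q * (y - x) * v)
      by (rewrite Fx, Fy; field; lra).
    nra. }
  assert (a / q * (y - x) * u <= 2 / q * (phi x - phi y)).
  { replace (a / q * (y - x) * u) with (2 / q * (a / 2 * (y - x) * u)) by (field; lra).
    apply Rmult_le_compat_l; [apply Rdiv_le_0_compat|]; lra. }
  replace ((FX (y / q) - FX y) - (FX (x / q) - FX x)) with ((u - v) - (phi x - phi y))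
    by (unfold u, v, survival; ring).
  replace (FX y - FX x) with (phi x - phi y) by (unfold survival; ring).
  pose proof (phi_antitone q lam phi Hq Hlam Hlim x y Hxy). apply Rabs_le. lra.
Qed.

Lemma sin_jump_step x y : 0 <= x <= y -> lam * (y - x) <= / 2 ->
  Rabs (s y - s x) * (FX (x / q) - FX x) <= alpha * (2 / q) * (FX y - FX x).
Proof.
  intros Hxy Hstep. pose proof (rate_pos q lam Hq Hlam). pose proof (log_freq_pos q Hq).
  assert (Hxq : 0 <= x / q) by (apply Rdiv_le_0_compat; lra).
  assert (Hu : 0 <= phi (x / q)) by apply (phi_bounds q lam phi Hq Hlam Hlim _ Hxq).
  pose proof (phi_drop_lower x y Hxy Hstep) as Hdrop.
  replace (FX y - FX x) with (phi x - phi y) by (unfold survival; ring).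
  rewrite FX_jump by lra.
  apply Rle_trans with (alpha * (a / q * (y - x) * phi (x / q))).
  - destruct (Req_dec x 0) as [Hx0|Hx0].
    + subst x. replace (a * 0 / q * phi (0 / q)) with 0 by (unfold Rdiv; ring).
      rewrite Rmult_0_r. apply Rmult_le_pos; [lra|].
      apply Rmult_le_pos; [apply Rmult_le_pos; [apply Rdiv_le_0_compat|]|]; lra.
    + apply Rle_trans with (alpha * ((y - x) / x) * (a * x / q * phi (x / q))).
      * apply Rmult_le_compat_r; [apply Rmult_le_pos; [apply Rdiv_le_0_compat; nra|lra]|].
        apply (log_sin_increment q Hq). lra.
      * right. field. lra.
  - replace (alpha * (2 / q) * (phi x - phi y)) with (alpha * (2 / q * (phi x - phi y))) by ring.
    apply Rmult_le_compat_l; [lra|].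
    replace (a / q * (y - x) * phi (x / q)) with (2 / q * (a / 2 * (y - x) * phi (x / q)))
      by (field; lra).
    apply Rmult_le_compat_l; [apply Rdiv_le_0_compat|]; lra.
Qed.

Lemma K_increment x y : 0 <= x <= y -> lam * (y - x) <= / 2 ->
  Rabs (K y - K x) <= osc_const * (FX y - FX x).
Proof.
  intros Hxy Hstep. unfold perturbation.
  assert (Hjx : 0 <= FX (x / q) - FX x).
  { rewrite FX_jump by lra. pose proof (rate_pos q lam Hq Hlam).
    apply Rmult_le_pos; [apply Rdiv_le_0_compat; nra|].
    apply (phi_bounds q lam phi Hq Hlam Hlim). apply Rdiv_le_0_compat; lra. }
  replace (s y * (FX (y / q) - FX y) - s x * (FX (x / q) - FX x))
    with (s y * ((FX (y / q) - FX y) - (FX (x / q) - FX x)) + (s y - s x) * (FX (x / q) - FX x))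
    by ring.
  eapply Rle_trans; [apply Rabs_triang|].
  rewrite !Rabs_mult, (Rabs_right (FX (x / q) - FX x)) by lra.
  pose proof (jump_step x y Hxy Hstep). pose proof (sin_jump_step x y Hxy Hstep).
  assert (Rabs (s y) * Rabs ((FX (y / q) - FX y) - (FX (x / q) - FX x))
          <= 1 * ((2 + 2 / q) * (FX y - FX x)))
    by (apply Rmult_le_compat; try apply Rabs_pos; [apply log_sin_bound|assumption]).
  unfold osc_const. replace ((2 + 2 * (1 + alpha) / q) * (FX y - FX x))
    with (1 * ((2 + 2 / q) * (FX y - FX x)) + alpha * (2 / q) * (FX y - FX x)) by (field; lra).
  lra.
Qed.

(** [GX] is a distribution function on [0, +oo): it vanishes on (-oo, 0), is
    continuous, nondecreasing (by [K_increment] and [monotone_of_local]) and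
    tends to [1] (as [|K| <= phi] and [phi] decays). *)
Lemma GX_nonpos t : t < 0 -> GX t = 0.
Proof. intros Ht. unfold GX. rewrite HFneg, K_nonpos by lra. ring. Qed.

Lemma GX_continuous x : continuous GX x.
Proof.
  unfold GX. apply (continuous_minus FX (fun t => perturb_size * K t)); [apply FX_continuous|].
  apply (continuous_multR (fun _ => perturb_size) K); [apply continuous_const|apply K_continuous].
Qed.

Lemma GX_monotone x y : x <= y -> GX x <= GX y.
Proof.
  assert (Hpos : forall u v, 0 <= u <= v -> GX u <= GX v).
  { apply (monotone_of_local _ (/ (2 * lam))); [apply Rinv_0_lt_compat; lra|].
    intros u v Huv Hstep. destruct perturb_size_bounds as [He Hec].
    assert (Hstep' : lam * (v - u) <= / 2).
    { apply Rmult_le_compat_l with (r := lam) in Hstep; [|lra].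
      replace (lam * / (2 * lam)) with (/ 2) in Hstep by (field; lra). exact Hstep. }
    pose proof (K_increment u v Huv Hstep') as Hk. apply Rabs_le_between in Hk.
    assert (Hmul : perturb_size * (K v - K u) <= perturb_size * (osc_const * (FX v - FX u)))
      by (apply Rmult_le_compat_l; lra).
    unfold GX. rewrite <- Rmult_assoc, Hec in Hmul. lra. }
  intros Hxy. destruct (Rlt_or_le y 0) as [Hy|Hy].
  - rewrite !GX_nonpos by lra. lra.
  - destruct (Rlt_or_le x 0) as [Hx|Hx].
    + rewrite (GX_nonpos x Hx).
      replace 0 with (GX 0) by (unfold GX; rewrite FX_at_0, K_nonpos by lra; ring).
      apply Hpos. lra.
    + apply Hpos. lra.
Qed.

Lemma GX_limit : tends_at_infty GX 1.
Proof.
  destruct (phi_decay q lam phi Hq Hlam Hlim 1) as [C [HC Hdecay]].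
  destruct perturb_size_bounds as [He Hec]. pose proof osc_const_pos.
  assert (He1 : perturb_size <= 1).
  { apply Rmult_le_reg_r with osc_const; [lra|]. rewrite Hec. lra. }
  apply (tends_at_infty_inv_bound _ _ (2 * C)). intros b Hb.
  specialize (Hdecay b ltac:(lra)). simpl in Hdecay. rewrite Rmult_1_r in Hdecay.
  pose proof (K_abs_le_phi b ltac:(lra)).
  pose proof (phi_bounds q lam phi Hq Hlam Hlim b ltac:(lra)).
  assert (Hphi : phi b <= C / b)
    by (apply Rmult_le_reg_l with b; [lra|]; replace (b * (C / b)) with C by (field; lra); lra).
  unfold GX. replace (FX b - perturb_size * K b - 1) with (- (phi b + perturb_size * K b))
    by (unfold survival; ring).
  rewrite Rabs_Ropp. eapply Rle_trans; [apply Rabs_triang|].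
  rewrite Rabs_mult, (Rabs_right perturb_size), Rabs_right by lra.
  assert (perturb_size * Rabs (K b) <= 1 * phi b) by (apply Rmult_le_compat; try lra; apply Rabs_pos).
  replace (2 * C / b) with (2 * (C / b)) by (field; lra). lra.
Qed.

Lemma GX_distribution : distribution_function_on_nonneg GX.
Proof.
  split; [|split; [|split]].
  - apply GX_monotone.
  - intros x eps He. destruct (continuous_eps_delta GX x (GX_continuous x) eps He) as [d [Hd H]].
    exists d. split; [exact Hd|]. intros y Hy. apply H. apply Rabs_def1; lra.
  - apply GX_nonpos.
  - apply GX_limit.
Qed.

(** [GX <> FX]: at [t1 = exp (pi / (2 alpha))], [s t1 = 1], so
    [K t1 = a t1 / q phi (t1 / q) > 0]. *)
Lemma GX_ne_FX : GX <> FX.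
Proof.
  intros E. pose proof (log_freq_pos q Hq). pose proof (rate_pos q lam Hq Hlam).
  set (t1 := exp (PI / (2 * alpha))). assert (Ht1 : 0 < t1) by apply exp_pos.
  assert (Hs : s t1 = 1).
  { unfold log_sin, t1. rewrite ln_exp.
    replace (alpha * (PI / (2 * alpha))) with (PI / 2) by (field; lra). apply sin_PI2. }
  assert (HK : K t1 = 0).
  { assert (GX t1 = FX t1) by (rewrite E; reflexivity). unfold GX in *.
    destruct perturb_size_bounds. apply Rmult_eq_reg_l with perturb_size; lra. }
  unfold perturbation in HK. rewrite Hs, Rmult_1_l, FX_jump in HK by lra.
  pose proof (phi_pos q lam phi Hq Hlam Hlim (t1 / q) ltac:(apply Rdiv_le_0_compat; lra)).
  assert (0 < a * t1 / q) by (apply Rdiv_lt_0_compat; nra). nra.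
Qed.

Lemma FX_parts_moment n b : 0 <= b ->
  parts_moment FX n b
  = 0 ^ n - b ^ n * phi b + integral (fun t => INR n * t ^ pred n * phi t) 0 b.
Proof.
  intros Hb. rewrite parts_moment_nonneg_support by (exact Hb || exact FX_continuous || exact HFneg).
  rewrite (integral_ext _ (fun t => INR n * t ^ pred n - INR n * t ^ pred n * phi t))
    by (intros; unfold survival; ring).
  rewrite integral_minus, (integral_FTC (fun t => t ^ n)).
  - unfold survival. ring.
  - exact Hb.
  - intros; apply is_derive_pow_id.
  - intros; apply continuous_pow_deriv.
  - apply ex_RInt_contR; intros; apply continuous_pow_deriv.
  - apply ex_RInt_pow_deriv_mult, phi_continuous.
Qed.

(** The moments of [FX] exist: the integral converges since [t^(n+1) phi] is
    bounded, and [b^n phi b -> 0]. *)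
Lemma FX_moment_limit n : exists m, tends_at_infty (parts_moment FX n) m.
Proof.
  destruct (phi_decay q lam phi Hq Hlam Hlim (pred n)) as [C1 [HC1 H1]].
  destruct (phi_decay q lam phi Hq Hlam Hlim (pred n + 2)) as [C2 [HC2 H2]].
  destruct (phi_decay q lam phi Hq Hlam Hlim (S n)) as [C3 [HC3 H3]].
  destruct (integral_limit_of_bound (fun t => INR n * t ^ pred n * phi t) (INR n * (C1 + C2)))
    as [l Hl].
  { intros z. apply continuous_multR; [apply continuous_pow_deriv|apply phi_continuous]. }
  { intros t Ht. pose proof (pos_INR n). specialize (H1 t Ht). specialize (H2 t Ht).
    rewrite pow_add in H2. pose proof (phi_bounds q lam phi Hq Hlam Hlim t Ht).
    assert (0 <= t ^ pred n) by (apply pow_le, Ht).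
    split; [apply Rmult_le_pos; [apply Rmult_le_pos|]; lra|].
    assert (Ht2 : 0 < 1 + t ^ 2) by (simpl; nra).
    apply Rmult_le_reg_r with (1 + t ^ 2); [exact Ht2|].
    replace (INR n * (C1 + C2) / (1 + t ^ 2) * (1 + t ^ 2)) with (INR n * (C1 + C2))
      by (field; lra).
    replace (INR n * t ^ pred n * phi t * (1 + t ^ 2))
      with (INR n * (t ^ pred n * phi t + t ^ pred n * t ^ 2 * phi t)) by ring.
    apply Rmult_le_compat_l; lra. }
  exists (0 ^ n + l).
  apply (tends_at_infty_ext (fun b => 0 ^ n + integral (fun t => INR n * t ^ pred n * phi t) 0 b
                                      + - (b ^ n * phi b)) _ _ 0).
  { intros b Hb. rewrite FX_parts_moment by exact Hb. ring. }
  replace (0 ^ n + l) with (0 ^ n + l + - 0) by ring.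
  apply tends_at_infty_plus; [apply tends_at_infty_plus; [apply tends_at_infty_const|exact Hl]|].
  apply (tends_at_infty_inv_bound _ _ C3). intros b Hb.
  specialize (H3 b ltac:(lra)). pose proof (phi_bounds q lam phi Hq Hlam Hlim b ltac:(lra)).
  assert (0 <= b ^ n * phi b) by (apply Rmult_le_pos; [apply pow_le|]; lra).
  rewrite Ropp_0, Rminus_0_r, Rabs_Ropp, Rabs_right by lra.
  apply Rmult_le_reg_l with b; [lra|]. replace (b * (C3 / b)) with C3 by (field; lra).
  simpl in H3. lra.
Qed.

Lemma K_parts_moment_limit n : tends_at_infty (parts_moment K n) 0.
Proof.
  destruct (phi_decay q lam phi Hq Hlam Hlim (S n)) as [C [HC Hdecay]].
  apply (tends_at_infty_ext (fun b => b ^ n * K b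
           + - INR n * integral (fun t => t ^ pred n * K t) 0 b) _ _ 0).
  { intros b Hb. rewrite parts_moment_nonneg_support by
      (exact Hb || exact K_continuous || (intros; apply K_nonpos; lra)).
    rewrite (integral_ext (fun t => INR n * t ^ pred n * K t) (fun t => INR n * (t ^ pred n * K t))) by (intros; ring).
    rewrite integral_scal by apply ex_RInt_K_moment. ring. }
  assert (Hpoint : tends_at_infty (fun b => b ^ n * K b) 0).
  { apply (tends_at_infty_inv_bound _ _ C). intros b Hb.
    specialize (Hdecay b ltac:(lra)). pose proof (K_abs_le_phi b ltac:(lra)).
    rewrite Rminus_0_r, Rabs_mult, <- RPow_abs, (Rabs_right b) by lra.
    apply Rmult_le_reg_l with b; [lra|]. replace (b * (C / b)) with C by (field; lra).
    assert (0 <= b ^ n) by (apply pow_le; lra).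
    assert (b ^ n * Rabs (K b) <= b ^ n * phi b) by (apply Rmult_le_compat_l; lra).
    simpl in Hdecay. nra. }
  pose proof (tends_at_infty_plus _ _ _ _ Hpoint
                (tends_at_infty_scal (- INR n) _ _ (K_moments_vanish (pred n)))) as Hsum.
  rewrite Rmult_0_r, Rplus_0_r in Hsum. exact Hsum.
Qed.

Lemma same_moments n : exists m, moment FX n m /\ moment GX n m.
Proof.
  destruct (FX_moment_limit n) as [m Hm]. exists m. split.
  - apply moment_of_parts_limit; [apply FX_continuous|exact Hm].
  - apply moment_of_parts_limit; [apply GX_continuous|].
    apply (tends_at_infty_ext (fun b => parts_moment FX n b + - perturb_size * parts_moment K n b)
             _ _ 0).
    { intros b _. unfold GX. rewrite parts_moment_lin by (apply FX_continuous || apply K_continuous).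
      ring. }
    replace m with (m + - perturb_size * 0) by ring.
    apply tends_at_infty_plus; [exact Hm|apply tends_at_infty_scal, K_parts_moment_limit].
Qed.

End Perturbation.

Theorem proposition5 (q lam : R) (FX : R -> R) :
  0 < q < 1 -> 0 < lam ->
  (forall t, t < 0 -> FX t = 0) ->
  (forall t, 0 <= t -> Un_cv (eq_neg_partial q lam t) (1 - FX t)) ->
  exists G : R -> R,
    distribution_function_on_nonneg G /\
    G <> FX /\
    (forall n : nat, exists m : R, moment FX n m /\ moment G n m).
Proof.
  intros Hq Hlam HFneg Hlim. exists (GX q FX). split; [|split].
  - exact (GX_distribution q lam FX Hq Hlam HFneg Hlim).
  - exact (GX_ne_FX q lam FX Hq Hlam HFneg Hlim).
  - exact (same_moments q lam FX Hq Hlam HFneg Hlim).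
Qed.
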